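(* Let $G\equiv H$ be finitely generated nilpotent groups. Then $G_0\cong H_0$ for any addition $G_0$ of $G$ and any addition $H_0$ of $H$.
   Context: For a subgroup $N$ of $G$, $Is(N)=\{x\in G:\ x^k\in N\text{ for some integer }k\ge1\}$. With $I(G)=Is(G')\cap Z(G)$, an addition of $G$ is a subgroup $G_0\le Z(G)$ such that $Z(G)=G_0\times I(G)$. *)

From Stdlib Require Import List.

Record group := Group {
  carrier :> Type;
  gmul : carrier -> carrier -> carrier;
  gone : carrier;
  ginv : carrier -> carrier;
  gmulA : forall x y z, gmul x (gmul y z) = gmul (gmul x y) z;
  gmul1l : forall x, gmul gone x = x;
  gmulVl : forall x, gmul (ginv x) x = gone
}.

Arguments gmul {g}.
Arguments gone {g}.
Arguments ginv {g}.

Section GroupDefs.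
Variable G : group.

Definition gset := G -> Prop.

Definition subgroup (A : gset) : Prop :=
  A gone /\ (forall x y, A x -> A y -> A (gmul x y)) /\ (forall x, A x -> A (ginv x)).

Inductive gen (S : gset) : gset :=
  | gen_in : forall x, S x -> gen S x
  | gen_one : gen S gone
  | gen_mul : forall x y, gen S x -> gen S y -> gen S (gmul x y)
  | gen_inv : forall x, gen S x -> gen S (ginv x).

Definition fin_gen : Prop :=
  exists l : list G, forall x : G, gen (fun y => In y l) x.

Definition commutator (x y : G) : G := gmul (gmul (ginv x) (ginv y)) (gmul x y).

Definition comm_sub (A B : gset) : gset :=
  gen (fun z => exists a b, A a /\ B b /\ z = commutator a b).

(* lower central series: gamma 0 = G, gamma (n+1) = [gamma n, G] *)
Fixpoint lcs (n : nat) : gset :=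
  match n with
  | 0 => fun _ => True
  | S k => comm_sub (lcs k) (fun _ => True)
  end.

Definition nilpotent : Prop := exists n, forall x, lcs n x -> x = gone.

Definition derived : gset := comm_sub (fun _ => True) (fun _ => True).

Definition center : gset := fun z => forall x, gmul z x = gmul x z.

Fixpoint gpow (x : G) (k : nat) : G :=
  match k with
  | 0 => gone
  | S k => gmul (gpow x k) x
  end.

Definition isolator (N : gset) : gset :=
  fun x => exists k, 1 <= k /\ N (gpow x k).

Definition Iset : gset := fun x => isolator derived x /\ center x.

(* G0 is an addition of G: G0 <= Z(G) and Z(G) = G0 x I(G) (internal direct product) *)
Definition addition (G0 : gset) : Prop :=
  subgroup G0 /\ (forall x, G0 x -> center x) /\
  (forall x, G0 x -> Iset x -> x = gone) /\
  (forall z, center z <-> exists a b, G0 a /\ Iset b /\ z = gmul a b).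

End GroupDefs.

Definition iso_sub (G H : group) (A : gset G) (B : gset H) : Prop :=
  exists f : G -> H,
    (forall x, A x -> B (f x)) /\
    (forall x y, A x -> A y -> f (gmul x y) = gmul (f x) (f y)) /\
    (forall x y, A x -> A y -> f x = f y -> x = y) /\
    (forall y, B y -> exists x, A x /\ f x = y).

Inductive term :=
  | TVar : nat -> term
  | TOne : term
  | TMul : term -> term -> term
  | TInv : term -> term.

Inductive formula :=
  | FEq : term -> term -> formula
  | FFalse : formula
  | FNot : formula -> formula
  | FAnd : formula -> formula -> formula
  | FOr : formula -> formula -> formula
  | FImp : formula -> formula -> formula
  | FEx : nat -> formula -> formula
  | FAll : nat -> formula -> formula.

Fixpoint teval (G : group) (v : nat -> G) (t : term) : G :=
  match t with
  | TVar n => v n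
  | TOne => gone
  | TMul a b => gmul (teval G v a) (teval G v b)
  | TInv a => ginv (teval G v a)
  end.

Definition upd (G : group) (v : nat -> G) (n : nat) (a : G) : nat -> G :=
  fun m => if Nat.eqb m n then a else v m.

Fixpoint sat (G : group) (v : nat -> G) (phi : formula) : Prop :=
  match phi with
  | FEq a b => teval G v a = teval G v b
  | FFalse => False
  | FNot p => ~ sat G v p
  | FAnd p q => sat G v p /\ sat G v q
  | FOr p q => sat G v p \/ sat G v q
  | FImp p q => sat G v p -> sat G v q
  | FEx n p => exists a : G, sat G (upd G v n a) p
  | FAll n p => forall a : G, sat G (upd G v n a) p
  end.

Fixpoint tvar_in (x : nat) (t : term) : Prop :=
  match t with
  | TVar n => n = x
  | TOne => False
  | TMul a b => tvar_in x a \/ tvar_in x b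
  | TInv a => tvar_in x a
  end.

Fixpoint free_in (x : nat) (phi : formula) : Prop :=
  match phi with
  | FEq a b => tvar_in x a \/ tvar_in x b
  | FFalse => False
  | FNot p => free_in x p
  | FAnd p q | FOr p q | FImp p q => free_in x p \/ free_in x q
  | FEx n p | FAll n p => n <> x /\ free_in x p
  end.

Definition sentence (phi : formula) : Prop := forall x, ~ free_in x phi.

(* G ≡ H : elementary equivalence (same first-order sentences; groups are nonempty,
   so the valuation is irrelevant for sentences; we use the constant valuation at 1) *)
Definition elem_equiv (G H : group) : Prop :=
  forall phi, sentence phi -> (sat G (fun _ => gone) phi <-> sat H (fun _ => gone) phi).

From Stdlib Require Import List ZArith Lia Classical ClassicalEpsilon FunctionalExtensionality Setoid Morphisms Permutation.
Import ListNotations.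

(* Let G0 be an addition of a finitely generated nilpotent group G, so
   Z(G) = G0 x I(G).  The proof has three ingredients.
   1. Every subgroup of a finitely generated nilpotent group is finitely
      generated (induction along the lower central series, whose factors are
      central).  Since G0 is central and meets I(G) trivially, it is
      torsion-free, and a Euclidean reduction on relations shows that it has a
      basis, i.e. G0 is free abelian of finite rank r.  Two additions with
      bases of the same length are isomorphic.
   2. I(G) is finitely generated and each of its elements has a power in G',
      so there are uniform bounds w, E such that every u in I(G) becomes, after
      multiplication by the square of a central element, an element whose
      E-th power is a product of w commutators.
   3. For such bounds, rank G0 is the largest s for which the first-order
      sentence [rank_sentence s w E] holds: "there are central z_1..z_s such
      that for no nonempty subset S and no central y the element
      (prod_{i in S} z_i) y^2 has an E-th power that is a product of w
      commutators".  A basis of G0 witnesses it for s = r ([basis_rank_prop]);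
      a witness with s > r contradicts a parity (pigeonhole) argument in G0
      modulo squares ([rank_prop_le_basis]).
   Elementary equivalence transfers these sentences between G and H (using the
   bounds of both groups), so the ranks agree and [mainTheorem6] follows. *)

Section GroupLaws.
Variable G : group.
Local Notation "x ** y" := (@gmul G x y) (at level 40, left associativity).
Local Notation "1" := (@gone G).

(* The record only gives left identity and left inverses; the right-handed
   laws and the usual inverse calculus follow. *)
Lemma gmulV (x : G) : x ** ginv x = 1.
Proof.
  rewrite <- (gmul1l G (x ** ginv x)).
  rewrite <- (gmulVl G (ginv x)) at 1.
  rewrite <- gmulA, (gmulA _ (ginv x) x (ginv x)), gmulVl, gmul1l.
  apply gmulVl.
Qed.

Lemma gmul1r (x : G) : x ** 1 = x.
Proof. rewrite <- (gmulVl G x), gmulA, gmulV, gmul1l. reflexivity. Qed.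

Lemma gmulKl (x y : G) : ginv x ** (x ** y) = y.
Proof. rewrite gmulA, gmulVl, gmul1l. reflexivity. Qed.

Lemma gmulKr (x y : G) : x ** (ginv x ** y) = y.
Proof. rewrite gmulA, gmulV, gmul1l. reflexivity. Qed.

Lemma mul_eq1 (x y : G) : x ** y = 1 -> y = ginv x.
Proof. intro H. rewrite <- (gmulKl x y), H, gmul1r. reflexivity. Qed.

Lemma ginvK (x : G) : ginv (ginv x) = x.
Proof. symmetry. apply mul_eq1, gmulVl. Qed.

Lemma ginvM (x y : G) : ginv (x ** y) = ginv y ** ginv x.
Proof.
  symmetry. apply mul_eq1.
  rewrite <- gmulA, (gmulA _ y), gmulV, gmul1l, gmulV. reflexivity.
Qed.

Lemma ginv1 : ginv (1) = 1.
Proof. symmetry. apply mul_eq1, gmul1l. Qed.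

(* Right-associated normal form used by the rewriting tactic [gsimpl]. *)
Lemma gmulA' (x y z : G) : x ** y ** z = x ** (y ** z).
Proof. rewrite gmulA. reflexivity. Qed.

End GroupLaws.

Global Hint Rewrite gmulA' gmul1l gmul1r gmulVl gmulV ginvK ginvM ginv1 gmulKl gmulKr : gsimp.
Ltac gsimpl := autorewrite with gsimp.
Tactic Notation "gsimpl" "in" hyp(H) := autorewrite with gsimp in H.

Section Commutators.
Variable G : group.
Local Notation "x ** y" := (@gmul G x y) (at level 40, left associativity).
Local Notation "1" := (@gone G).

Lemma gmul_cancel_r (a x y : G) : x ** a = y ** a -> x = y.
Proof. intro H. rewrite <- (gmul1r G x), <- (gmulV G a), gmulA, H. gsimpl. reflexivity. Qed.

Definition conj (h x : G) := ginv h ** x ** h.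

Lemma comm_mul_l (x y g : G) :
  commutator G (x ** y) g = conj y (commutator G x g) ** commutator G y g.
Proof. unfold commutator, conj. gsimpl. reflexivity. Qed.
Lemma comm_mul_r (x g h : G) :
  commutator G x (g ** h) = commutator G x h ** conj h (commutator G x g).
Proof. unfold commutator, conj. gsimpl. reflexivity. Qed.
Lemma comm_inv_l (x g : G) :
  commutator G (ginv x) g = conj (ginv x) (ginv (commutator G x g)).
Proof. unfold commutator, conj. gsimpl. reflexivity. Qed.
Lemma comm_inv_r (x g : G) :
  commutator G x (ginv g) = conj (ginv g) (ginv (commutator G x g)).
Proof. unfold commutator, conj. gsimpl. reflexivity. Qed.
Lemma conj_comm (h a : G) : conj h a = a ** commutator G a h.
Proof. unfold commutator, conj. gsimpl. reflexivity. Qed.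
Lemma comm_one_l (g : G) : commutator G 1 g = 1.
Proof. unfold commutator. gsimpl. reflexivity. Qed.
Lemma comm_one_r (g : G) : commutator G g 1 = 1.
Proof. unfold commutator. gsimpl. reflexivity. Qed.

Lemma conj_commutator h a b :
  conj h (commutator G a b) = commutator G (conj h a) (conj h b).
Proof. unfold conj, commutator. gsimpl. reflexivity. Qed.
Lemma conj_mul h a b : conj h (a ** b) = conj h a ** conj h b.
Proof. unfold conj. gsimpl. reflexivity. Qed.
Lemma conj_inv h a : conj h (ginv a) = ginv (conj h a).
Proof. unfold conj. gsimpl. reflexivity. Qed.
Lemma conj_one h : conj h 1 = 1.
Proof. unfold conj. gsimpl. reflexivity. Qed.

End Commutators.
Arguments conj {G}.

Section Powers.
Variable G : group.
Local Notation "x ** y" := (@gmul G x y) (at level 40, left associativity).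
Local Notation "1" := (@gone G).

Definition gpowz (x : G) (z : Z) : G :=
  match z with
  | Z0 => 1
  | Zpos p => gpow G x (Pos.to_nat p)
  | Zneg p => ginv (gpow G x (Pos.to_nat p))
  end.

Lemma gpow_comm (x : G) n : gpow G x n ** x = x ** gpow G x n.
Proof.
  induction n; simpl; gsimpl; [reflexivity|].
  rewrite gmulA, IHn, gmulA', IHn. reflexivity.
Qed.

Lemma gpowz_nat (x : G) (n : nat) : gpowz x (Z.of_nat n) = gpow G x n.
Proof. destruct n; simpl; auto. rewrite SuccNat2Pos.id_succ. reflexivity. Qed.

Lemma gpowz_nat_opp (x : G) (n : nat) : gpowz x (- Z.of_nat n) = ginv (gpow G x n).
Proof. destruct n; simpl. symmetry; apply ginv1. rewrite SuccNat2Pos.id_succ. reflexivity. Qed.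

Lemma gpowz_succ (x : G) z : gpowz x (z + 1) = gpowz x z ** x.
Proof.
  destruct (Z_le_gt_dec 0 z).
  - rewrite <- (Z2Nat.id z) by lia.
    replace (Z.of_nat (Z.to_nat z) + 1)%Z with (Z.of_nat (S (Z.to_nat z))) by lia.
    rewrite !gpowz_nat. reflexivity.
  - replace z with (- Z.of_nat (S (Z.to_nat (- z - 1))))%Z by lia.
    replace (- Z.of_nat (S (Z.to_nat (- z - 1))) + 1)%Z
      with (- Z.of_nat (Z.to_nat (- z - 1)))%Z by lia.
    rewrite !gpowz_nat_opp. simpl. rewrite gpow_comm. gsimpl. reflexivity.
Qed.

Lemma gpowz_pred (x : G) z : gpowz x (z - 1) = gpowz x z ** ginv x.
Proof. replace z with ((z - 1) + 1)%Z at 2 by lia. rewrite gpowz_succ. gsimpl. reflexivity. Qed.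

Lemma gpowz_add (x : G) a b : gpowz x (a + b) = gpowz x a ** gpowz x b.
Proof.
  induction b using Z.peano_ind.
  - rewrite Z.add_0_r. simpl. gsimpl. reflexivity.
  - rewrite <- Z.add_1_r, Z.add_assoc, !gpowz_succ, IHb. gsimpl. reflexivity.
  - rewrite <- Z.sub_1_r. replace (a + (b - 1))%Z with ((a + b) - 1)%Z by lia.
    rewrite !gpowz_pred, IHb. gsimpl. reflexivity.
Qed.

Lemma gpowz1 (x : G) : gpowz x 1 = x.
Proof. simpl. gsimpl. reflexivity. Qed.

Lemma gpowz_opp (x : G) a : gpowz x (- a) = ginv (gpowz x a).
Proof. apply mul_eq1. rewrite <- gpowz_add, Z.add_opp_diag_r. reflexivity. Qed.

Lemma gpowz_mul (x : G) a b : gpowz x (a * b) = gpowz (gpowz x a) b.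
Proof.
  induction b using Z.peano_ind.
  - rewrite Z.mul_0_r. reflexivity.
  - rewrite <- Z.add_1_r, Z.mul_add_distr_l, Z.mul_1_r, gpowz_add, gpowz_succ, IHb.
    reflexivity.
  - rewrite <- Z.sub_1_r, Z.mul_sub_distr_l, Z.mul_1_r.
    replace (a * b - a)%Z with (a * b + - a)%Z by lia.
    rewrite gpowz_add, gpowz_pred, IHb, gpowz_opp. reflexivity.
Qed.

Lemma gpowz_one a : gpowz 1 a = 1.
Proof.
  induction a using Z.peano_ind; auto.
  - rewrite <- Z.add_1_r, gpowz_succ, IHa. gsimpl. auto.
  - rewrite <- Z.sub_1_r, gpowz_pred, IHa. gsimpl. auto.
Qed.

Definition commute (x y : G) := x ** y = y ** x.

Lemma commute_sym x y : commute x y -> commute y x.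
Proof. unfold commute; auto. Qed.
Lemma commute_mul_r x y z : commute x y -> commute x z -> commute x (y ** z).
Proof. unfold commute; intros Hy Hz. rewrite gmulA, Hy, <- gmulA, Hz, gmulA. auto. Qed.
Lemma commute_inv_r x y : commute x y -> commute x (ginv y).
Proof.
  unfold commute; intro H. apply (gmul_cancel_r _ y).
  rewrite !gmulA', gmulVl, gmul1r, H. gsimpl. auto.
Qed.
Lemma commute_gpowz_r x y a : commute x y -> commute x (gpowz y a).
Proof.
  intro H. induction a using Z.peano_ind.
  - unfold commute. simpl. gsimpl. auto.
  - rewrite <- Z.add_1_r, gpowz_succ. apply commute_mul_r; auto.
  - rewrite <- Z.sub_1_r, gpowz_pred. apply commute_mul_r, commute_inv_r; auto.
Qed.

Lemma gpowz_mul_comm x y a : commute x y -> gpowz (x ** y) a = gpowz x a ** gpowz y a.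
Proof.
  intro H. induction a using Z.peano_ind.
  - simpl. gsimpl. auto.
  - rewrite <- Z.add_1_r, !gpowz_succ, IHa.
    assert (Hyx : commute (gpowz y a) x) by (apply commute_sym, commute_gpowz_r; auto).
    unfold commute in Hyx. rewrite !gmulA'. f_equal. rewrite !gmulA, Hyx. auto.
  - rewrite <- Z.sub_1_r, !gpowz_pred, IHa.
    assert (Hyx : commute (gpowz y a) (ginv x))
      by (apply commute_inv_r, commute_sym, commute_gpowz_r; auto).
    unfold commute in Hyx. rewrite H. gsimpl. f_equal. rewrite !gmulA, Hyx. auto.
Qed.

Lemma gpowz_inv x a : gpowz (ginv x) a = ginv (gpowz x a).
Proof.
  rewrite <- gpowz_opp. replace (- a)%Z with (-1 * a)%Z by lia.
  rewrite gpowz_mul. simpl. gsimpl. auto.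
Qed.

Lemma gpow_mul x m n : gpow G x (m * n) = gpow G (gpow G x m) n.
Proof. rewrite <- !gpowz_nat, Nat2Z.inj_mul, gpowz_mul, gpowz_nat. auto. Qed.
Lemma gpow_mul_comm x y n : commute x y -> gpow G (x ** y) n = gpow G x n ** gpow G y n.
Proof. intro H. rewrite <- !gpowz_nat. apply gpowz_mul_comm; auto. Qed.
Lemma gpow_one n : gpow G 1 n = 1.
Proof. rewrite <- gpowz_nat. apply gpowz_one. Qed.
Lemma gpow_inv x n : gpow G (ginv x) n = ginv (gpow G x n).
Proof. rewrite <- !gpowz_nat. apply gpowz_inv. Qed.

Definition central (x : G) := forall y, x ** y = y ** x.

Lemma central_commute x y : central x -> commute x y.
Proof. intro H; apply H. Qed.
Lemma central_mul x y : central x -> central y -> central (x ** y).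
Proof. intros Hx Hy z. apply commute_sym, commute_mul_r; apply commute_sym; [apply Hx|apply Hy]. Qed.
Lemma central_inv x : central x -> central (ginv x).
Proof. intros Hx z. apply commute_sym, commute_inv_r, commute_sym, Hx. Qed.
Lemma central_one : central 1.
Proof. intro z. gsimpl. auto. Qed.
Lemma central_gpowz x a : central x -> central (gpowz x a).
Proof. intros Hx z. apply commute_sym, commute_gpowz_r, commute_sym, Hx. Qed.

Lemma mul_central_swap a x v : central a -> x ** (a ** v) = a ** (x ** v).
Proof. intro Ha. rewrite gmulA, <- (Ha x), gmulA'. auto. Qed.

End Powers.
Arguments gpowz {G}.
Arguments commute {G}.
Arguments central {G}.

Section Subgroups.
Variable G : group.
Local Notation "x ** y" := (@gmul G x y) (at level 40, left associativity).
Local Notation "1" := (@gone G).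

Lemma subgroup_one (S : gset G) : subgroup G S -> S 1.
Proof. intros [? ?]; auto. Qed.
Lemma subgroup_mul (S : gset G) x y : subgroup G S -> S x -> S y -> S (x ** y).
Proof. intros [? [? ?]]; auto. Qed.
Lemma subgroup_inv (S : gset G) x : subgroup G S -> S x -> S (ginv x).
Proof. intros [? [? ?]]; auto. Qed.
Lemma subgroup_gpowz (S : gset G) x a : subgroup G S -> S x -> S (gpowz x a).
Proof.
  intros HS Hx. induction a using Z.peano_ind.
  - exact (subgroup_one S HS).
  - rewrite <- Z.add_1_r, gpowz_succ. apply subgroup_mul; auto.
  - rewrite <- Z.sub_1_r, gpowz_pred. apply subgroup_mul, subgroup_inv; auto.
Qed.
Lemma subgroup_gpow (S : gset G) x n : subgroup G S -> S x -> S (gpow G x n).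
Proof. intros. rewrite <- gpowz_nat. apply subgroup_gpowz; auto. Qed.

Lemma subgroup_True : subgroup G (fun _ => True).
Proof. split; auto. Qed.
Lemma subgroup_and (S T : gset G) :
  subgroup G S -> subgroup G T -> subgroup G (fun x => S x /\ T x).
Proof.
  intros HS HT. split; [|split]; intros;
    repeat split; try apply subgroup_one; try apply subgroup_mul; try apply subgroup_inv; tauto.
Qed.

Lemma gen_subgroup (S : gset G) : subgroup G (gen G S).
Proof. split; [|split]; intros. apply gen_one. apply gen_mul; auto. apply gen_inv; auto. Qed.
Lemma gen_min (S T : gset G) :
  subgroup G T -> (forall x, S x -> T x) -> forall x, gen G S x -> T x.
Proof.
  intros HT HST x Hx. induction Hx.
  - auto.
  - apply subgroup_one; auto.
  - apply subgroup_mul; auto.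
  - apply subgroup_inv; auto.
Qed.
Lemma gen_mono (S T : gset G) : (forall x, S x -> T x) -> forall x, gen G S x -> gen G T x.
Proof. intros H x. apply gen_min. apply gen_subgroup. intros; apply gen_in; auto. Qed.

Definition inL (l : list G) : gset G := fun y => In y l.

Lemma gen_sub l1 l2 : (forall y, In y l1 -> gen G (inL l2) y) ->
  forall x, gen G (inL l1) x -> gen G (inL l2) x.
Proof. intro H. apply gen_min. apply gen_subgroup. auto. Qed.
Lemma gen_incl l1 l2 : incl l1 l2 -> forall x, gen G (inL l1) x -> gen G (inL l2) x.
Proof. intro H. apply gen_mono. intros y Hy. apply H. auto. Qed.
Lemma gen_iff_perm l1 l2 : Permutation l1 l2 -> forall x, gen G (inL l1) x <-> gen G (inL l2) x.
Proof.
  intros H x. split; apply gen_incl; intros y Hy.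
  - exact (Permutation_in y H Hy).
  - exact (Permutation_in y (Permutation_sym H) Hy).
Qed.

Definition normal (N : gset G) := subgroup G N /\ forall h x, N x -> N (conj h x).

End Subgroups.
Arguments inL {G}.
Arguments normal {G}.

Lemma Zsub_cyclic (T : Z -> Prop) :
  T 0%Z -> (forall a b, T a -> T b -> T (a + b)%Z) -> (forall a, T a -> T (- a)%Z) ->
  exists d, T d /\ forall k, T k -> exists q, k = (q * d)%Z.
Proof.
  intros T0 Tadd Topp.
  assert (Tmul : forall d q, T d -> T (q * d)%Z).
  { intros d q Hd. induction q using Z.peano_ind.
    - auto.
    - replace (Z.succ q * d)%Z with (q * d + d)%Z by lia. auto.
    - replace (Z.pred q * d)%Z with (q * d + - d)%Z by lia. auto. }
  destruct (classic (exists n : nat, T (Z.of_nat (S n)))) as [Hpos|Hno].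
  - (* the generator is the least positive element d; remainders mod d vanish *)
    destruct (dec_inh_nat_subset_has_unique_least_element (fun n => T (Z.of_nat (S n))))
      as [d [[Hd Hmin] _]]; [intro; apply classic | exact Hpos |].
    exists (Z.of_nat (S d)). split; auto.
    intros j Hj. exists (j / Z.of_nat (S d))%Z.
    pose proof (Z.div_mod j (Z.of_nat (S d))) as Ediv.
    pose proof (Z.mod_pos_bound j (Z.of_nat (S d))) as Bmod.
    assert (Hr : T (j mod Z.of_nat (S d))%Z).
    { replace (j mod Z.of_nat (S d))%Z with (j + - (j / Z.of_nat (S d) * Z.of_nat (S d)))%Z
        by (rewrite Ediv at 1 by lia; lia).
      auto. }
    destruct (Z.eq_dec (j mod Z.of_nat (S d)) 0) as [E0|E0].
    + rewrite Ediv at 1 by lia. rewrite E0. lia.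
    + exfalso. set (r := Z.to_nat (j mod Z.of_nat (S d))).
      assert (Hle : d <= pred r).
      { apply Hmin. replace (Z.of_nat (S (pred r))) with (j mod Z.of_nat (S d))%Z; auto.
        unfold r. assert (0 <= j mod Z.of_nat (S d))%Z by (apply Bmod; lia). lia. }
      assert (j mod Z.of_nat (S d) < Z.of_nat (S d))%Z by (apply Bmod; lia).
      unfold r in Hle. lia.
  - (* T has no positive, hence no nonzero element *)
    exists 0%Z. split; auto. intros k Hk. exists 0%Z.
    destruct (Z_lt_le_dec 0 k); [|destruct (Z.eq_dec k 0); [lia|]]; exfalso; apply Hno.
    + exists (pred (Z.to_nat k)). replace (Z.of_nat (S (pred (Z.to_nat k)))) with k by lia. auto.
    + exists (pred (Z.to_nat (- k))).
      replace (Z.of_nat (S (pred (Z.to_nat (- k))))) with (- k)%Z by lia. auto.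
Qed.

Section CongruenceModN.
Variable G : group.
Local Notation "x ** y" := (@gmul G x y) (at level 40, left associativity).
Local Notation "1" := (@gone G).
Variable N : gset G.
Hypothesis HN : normal N.

Definition cong (x y : G) := N (ginv x ** y).

Let HNsub : subgroup G N := proj1 HN.

Global Instance cong_Equiv : Equivalence cong.
Proof.
  unfold cong. split; red.
  - intro x. gsimpl. apply subgroup_one, HNsub.
  - intros x y H. apply (subgroup_inv _ _ _ HNsub) in H. gsimpl. gsimpl in H. auto.
  - intros x y z H1 H2. pose proof (subgroup_mul _ _ _ _ HNsub H1 H2) as H. gsimpl in H. auto.
Qed.

Global Instance gmul_Proper : Proper (cong ==> cong ==> cong) (@gmul G).
Proof.
  intros x x' Hx y y' Hy. unfold cong in *.
  replace (ginv (x ** y) ** (x' ** y')) with (conj y (ginv x ** x') ** (ginv y ** y'))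
    by (unfold conj; gsimpl; auto).
  apply subgroup_mul; auto. apply HN; auto.
Qed.

Global Instance ginv_Proper : Proper (cong ==> cong) (@ginv G).
Proof.
  intros x x' Hx. unfold cong in *.
  replace (ginv (ginv x) ** ginv x') with (ginv (conj (ginv x) (ginv x ** x')))
    by (unfold conj; gsimpl; auto).
  apply subgroup_inv; auto. apply HN; auto.
Qed.

Global Instance gpowz_Proper : Proper (cong ==> eq ==> cong) (@gpowz G).
Proof.
  intros x x' Hx a a' <-. induction a using Z.peano_ind.
  - reflexivity.
  - rewrite <- Z.add_1_r, !gpowz_succ, IHa, Hx. reflexivity.
  - rewrite <- Z.sub_1_r, !gpowz_pred, IHa, Hx. reflexivity.
Qed.

Definition central_mod (a : G) := forall x, cong (a ** x) (x ** a).

Lemma central_mod_comm a : (forall x, N (commutator G a x)) -> central_mod a.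
Proof.
  intros H x. unfold cong.
  replace (ginv (a ** x) ** (x ** a)) with (ginv (commutator G a x))
    by (unfold commutator; gsimpl; auto).
  apply subgroup_inv; auto.
Qed.

Lemma central_mod_mul a b : central_mod a -> central_mod b -> central_mod (a ** b).
Proof.
  intros Ha Hb x. transitivity (a ** (b ** x)). gsimpl; reflexivity.
  rewrite (Hb x). transitivity ((a ** x) ** b). gsimpl; reflexivity.
  rewrite (Ha x). gsimpl. reflexivity.
Qed.
Lemma central_mod_inv a : central_mod a -> central_mod (ginv a).
Proof.
  intros Ha x. transitivity (ginv a ** (x ** a) ** ginv a). gsimpl. reflexivity.
  rewrite <- (Ha x). gsimpl. reflexivity.
Qed.
Lemma central_mod_gpowz a k : central_mod a -> central_mod (gpowz a k).
Proof.
  intro Ha. induction k using Z.peano_ind.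
  - intro x. simpl. gsimpl. reflexivity.
  - rewrite <- Z.add_1_r, gpowz_succ. apply central_mod_mul; auto.
  - rewrite <- Z.sub_1_r, gpowz_pred. apply central_mod_mul, central_mod_inv; auto.
Qed.

Lemma central_mod_gpowz_mul a b k :
  central_mod a -> cong (gpowz (a ** b) k) (gpowz a k ** gpowz b k).
Proof.
  intro Ha. induction k using Z.peano_ind.
  - simpl. gsimpl. reflexivity.
  - rewrite <- Z.add_1_r, !gpowz_succ, IHk.
    transitivity (gpowz a k ** (gpowz b k ** a) ** b). gsimpl; reflexivity.
    rewrite <- (Ha (gpowz b k)). gsimpl. reflexivity.
  - rewrite <- Z.sub_1_r, !gpowz_pred, IHk.
    transitivity (gpowz a k ** ((gpowz b k ** ginv b) ** ginv a)). gsimpl; reflexivity.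
    rewrite <- (central_mod_inv a Ha (gpowz b k ** ginv b)). gsimpl. reflexivity.
Qed.

(* [gen_mod M x]: x lies in the subgroup generated by M and N. *)
Definition gen_mod (M : list G) (x : G) := exists y, gen G (inL M) y /\ cong y x.

Lemma gen_mod_subgroup M : subgroup G (gen_mod M).
Proof.
  split; [|split].
  - exists 1. split. apply gen_one. reflexivity.
  - intros x y [x' [Hx Ex]] [y' [Hy Ey]]. exists (x' ** y'). split. apply gen_mul; auto.
    rewrite Ex, Ey. reflexivity.
  - intros x [x' [Hx Ex]]. exists (ginv x'). split. apply gen_inv; auto. rewrite Ex. reflexivity.
Qed.

Lemma gen_mod_gen M x : gen G (inL M) x -> gen_mod M x.
Proof. intro H. exists x. split; auto. reflexivity. Qed.

Lemma gen_mod_cong M x x' : gen_mod M x -> cong x x' -> gen_mod M x'.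
Proof. intros [y [Hy E]] E'. exists y. split; auto. rewrite E; auto. Qed.

Lemma collect_central_gen a M' y : central_mod a -> gen G (inL (a :: M')) y ->
  exists k y', gen G (inL M') y' /\ cong y (gpowz a k ** y').
Proof.
  intros Ha Hy.
  induction Hy as [x Hx| |x z _ [k [y' [H1 E1]]] _ [l [y'' [H2 E2]]]|x _ [k [y' [H1 E1]]]].
  - destruct Hx as [<-|Hx].
    + exists 1%Z, 1. split. apply gen_one. rewrite gpowz1. gsimpl. reflexivity.
    + exists 0%Z, x. split. apply gen_in; auto. simpl. gsimpl. reflexivity.
  - exists 0%Z, 1. split. apply gen_one. simpl. gsimpl. reflexivity.
  - exists (k + l)%Z, (y' ** y''). split. apply gen_mul; auto.
    rewrite E1, E2, gpowz_add.
    transitivity (gpowz a k ** (y' ** gpowz a l) ** y''). gsimpl; reflexivity.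
    rewrite <- (central_mod_gpowz a l Ha y'). gsimpl. reflexivity.
  - exists (- k)%Z, (ginv y'). split. apply gen_inv; auto.
    rewrite E1, gpowz_opp. gsimpl.
    rewrite <- (central_mod_inv _ (central_mod_gpowz a k Ha) (ginv y')). reflexivity.
Qed.

Section Exponents.
Variables (a : G) (M' : list G) (K : gset G).
Hypothesis Ha : central_mod a.
Hypothesis HK : subgroup G K.

(* The exponents k for which a^k y (y in <M'>) is congruent to an element of
   K form a subgroup of Z, hence a cyclic one, generated by some d realised
   by an element s0 of K. *)
Lemma exponent_generator : exists d s0 y0,
  K s0 /\ gen G (inL M') y0 /\ cong s0 (gpowz a d ** y0) /\
  forall k s y, K s -> gen G (inL M') y -> cong s (gpowz a k ** y) -> exists q, k = (q * d)%Z.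
Proof.
  set (T := fun k => exists s y, K s /\ gen G (inL M') y /\ cong s (gpowz a k ** y)).
  destruct (Zsub_cyclic T) as [d [[s0 [y0 [Hs0 [Hy0 Es0]]]] Hd]].
  - exists 1, 1. split. apply subgroup_one; auto. split. apply gen_one. simpl; gsimpl; reflexivity.
  - intros k l [s [y [Hs [Hy Es]]]] [t [y' [Ht [Hy' Et]]]].
    exists (s ** t), (y ** y'). split. apply subgroup_mul; auto. split. apply gen_mul; auto.
    rewrite Es, Et, gpowz_add.
    transitivity (gpowz a k ** (y ** gpowz a l) ** y'). gsimpl; reflexivity.
    rewrite <- (central_mod_gpowz a l Ha y). gsimpl. reflexivity.
  - intros k [s [y [Hs [Hy Es]]]]. exists (ginv s), (ginv y).
    split. apply subgroup_inv; auto. split. apply gen_inv; auto.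
    rewrite Es, gpowz_opp. gsimpl.
    rewrite <- (central_mod_inv _ (central_mod_gpowz a k Ha) (ginv y)). reflexivity.
  - exists d, s0, y0. repeat split; auto.
    intros k s y Hs Hy E. apply Hd. exists s, y. auto.
Qed.

End Exponents.

(* Induction on M, peeling off the first generator with
   [exponent_generator]. *)
Lemma fg_mod_central (M : list G) : (forall m, In m M -> central_mod m) ->
  forall K : gset G, subgroup G K -> (forall x, K x -> gen_mod M x) ->
  exists L, (forall l, In l L -> K l) /\ forall x, K x -> gen_mod L x.
Proof.
  induction M as [|a M' IH]; intros HM K HK HKM.
  - exists []. split. intros l []. auto.
  - assert (Ha : central_mod a) by (apply HM; left; auto).
    destruct (exponent_generator a M' K Ha HK) as [d [s0 [y0 [Hs0 [Hy0 [Es0 Hd]]]]]].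
    set (K' := fun x => K x /\ gen_mod M' x).
    destruct (IH (fun m Hm => HM m (or_intror Hm)) K') as [L' [HL'1 HL'2]].
    { apply subgroup_and; auto. apply gen_mod_subgroup. }
    { intros x [_ Hx]; auto. }
    exists (s0 :: L'). split.
    + intros l [<-|Hl]; auto. apply HL'1; auto.
    + intros s Hs. destruct (HKM s Hs) as [y [Hy Ey]].
      destruct (collect_central_gen a M' y Ha Hy) as [k [y' [Hy' Ey']]].
      destruct (Hd k s y') as [q ->]; auto. { rewrite <- Ey, Ey'. reflexivity. }
      (* s0^-q s lies in K and in <M'>N, so the induction hypothesis applies *)
      set (t := ginv (gpowz s0 q) ** s).
      assert (Ht : K' t).
      { split.
        - apply subgroup_mul; auto. apply subgroup_inv, subgroup_gpowz; auto.
        - apply (gen_mod_cong M' (ginv (gpowz y0 q) ** y')).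
          + apply gen_mod_gen. apply gen_mul; auto.
            apply gen_inv, subgroup_gpowz; auto using gen_subgroup.
          + unfold t. rewrite <- Ey, Ey', Es0.
            rewrite (central_mod_gpowz_mul (gpowz a d) y0 q (central_mod_gpowz a d Ha)).
            rewrite (Z.mul_comm q d), gpowz_mul. gsimpl. reflexivity. }
      destruct (HL'2 t Ht) as [z [Hz Ez]].
      exists (gpowz s0 q ** z). split.
      * apply gen_mul.
        -- apply subgroup_gpowz. apply gen_subgroup. apply gen_in. left; auto.
        -- revert Hz. apply gen_incl. intros w Hw. right; auto.
      * rewrite Ez. unfold t. gsimpl. reflexivity.
Qed.

End CongruenceModN.

Section LowerCentralSeries.
Variable G : group.
Local Notation "x ** y" := (@gmul G x y) (at level 40, left associativity).
Local Notation "1" := (@gone G).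
Implicit Types (a b c h m x y z : G).

Lemma lcs_subgroup i : subgroup G (lcs G i).
Proof. destruct i; simpl. apply subgroup_True. apply gen_subgroup. Qed.

Lemma lcs_normal i : normal (lcs G i).
Proof.
  split. apply lcs_subgroup.
  induction i; intros h x Hx; simpl in *; auto.
  induction Hx as [x [a [b [Ha [_ ->]]]]| |x y _ IHx _ IHy|x _ IHx].
  - apply gen_in. exists (conj h a), (conj h b). repeat split; auto. apply conj_commutator.
  - rewrite conj_one. apply gen_one.
  - rewrite conj_mul. apply gen_mul; auto.
  - rewrite conj_inv. apply gen_inv; auto.
Qed.

Lemma lcs_comm i a b : lcs G i a -> lcs G (S i) (commutator G a b).
Proof. intro H. simpl. apply gen_in. exists a, b. auto. Qed.

Lemma lcs_central_mod i m : lcs G i m -> central_mod G (lcs G (S i)) m.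
Proof. intro H. apply central_mod_comm. apply lcs_normal. intro x. apply lcs_comm; auto. Qed.

Lemma lcs_conj_cong i h c : lcs G (S i) c -> cong G (lcs G (S (S i))) c (conj h c).
Proof. intro H. unfold cong. rewrite conj_comm. gsimpl. apply lcs_comm; auto. Qed.

Variable gens : list G.
Hypothesis Hgens : forall x, gen G (inL gens) x.

(* Generators of gamma_i modulo gamma_(i+1): the left-normed commutators of
   weight i+1 in the generators of G. *)
Fixpoint lcs_gens (i : nat) : list G :=
  match i with
  | 0 => gens
  | S i => flat_map (fun m => map (fun g => commutator G m g) gens) (lcs_gens i)
  end.

Lemma lcs_gens_lcs i m : In m (lcs_gens i) -> lcs G i m.
Proof.
  revert m; induction i; intros m Hm; simpl in *; auto.
  apply in_flat_map in Hm. destruct Hm as [m' [Hm' Hin]]. apply in_map_iff in Hin.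
  destruct Hin as [g [<- _]]. apply lcs_comm. auto.
Qed.

Lemma gen_lcs_gens_lcs i y : gen G (inL (lcs_gens i)) y -> lcs G i y.
Proof. apply gen_min. apply lcs_subgroup. intros; apply lcs_gens_lcs; auto. Qed.

Section Step.
Variable i : nat.
Local Notation N := (lcs G (S (S i))).
Let HN : normal N := lcs_normal (S (S i)).
Let Hsub : subgroup G (gen_mod G N (lcs_gens (S i))) := gen_mod_subgroup G N HN _.

(* Modulo gamma_(i+2), commutators are multiplicative in each argument, so
   [m, b] lies in the span of the [m, g] for g a generator. *)
Lemma comm_gens_gen_mod m b : In m (lcs_gens i) ->
  gen_mod G N (lcs_gens (S i)) (commutator G m b).
Proof.
  intro Hm. induction (Hgens b) as [g Hg| |b1 b2 _ IH1 _ IH2|b1 _ IH1].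
  - apply (gen_mod_gen G N HN). apply gen_in. unfold inL. simpl. apply in_flat_map.
    exists m. split; auto. apply in_map_iff. exists g; auto.
  - rewrite comm_one_r. apply subgroup_one; auto.
  - rewrite comm_mul_r. apply subgroup_mul; auto.
    apply (gen_mod_cong G N HN _ (commutator G m b1)); auto.
    apply lcs_conj_cong, lcs_comm, lcs_gens_lcs; auto.
  - rewrite comm_inv_r. apply (gen_mod_cong G N HN _ (ginv (commutator G m b1))).
    + apply subgroup_inv; auto.
    + apply lcs_conj_cong, subgroup_inv. apply lcs_subgroup. apply lcs_comm, lcs_gens_lcs; auto.
Qed.

Lemma comm_gen_gen_mod y b : gen G (inL (lcs_gens i)) y ->
  gen_mod G N (lcs_gens (S i)) (commutator G y b).
Proof.
  intro Hy. revert b. induction Hy as [m Hm| |y1 y2 Hy1 IH1 Hy2 IH2|y1 Hy1 IH1]; intro b.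
  - apply comm_gens_gen_mod; auto.
  - rewrite comm_one_l. apply subgroup_one; auto.
  - rewrite comm_mul_l. apply subgroup_mul; auto.
    apply (gen_mod_cong G N HN _ (commutator G y1 b)); auto.
    apply lcs_conj_cong, lcs_comm, gen_lcs_gens_lcs; auto.
  - rewrite comm_inv_l. apply (gen_mod_cong G N HN _ (ginv (commutator G y1 b))).
    + apply subgroup_inv; auto.
    + apply lcs_conj_cong, subgroup_inv. apply lcs_subgroup. apply lcs_comm, gen_lcs_gens_lcs; auto.
Qed.

End Step.

Lemma lcs_gen_mod i x : lcs G i x -> gen_mod G (lcs G (S i)) (lcs_gens i) x.
Proof.
  revert x. induction i; intros x Hx.
  - apply (gen_mod_gen G _ (lcs_normal 1)). apply Hgens.
  - set (N := lcs G (S (S i))).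
    assert (HN : normal N) by apply lcs_normal.
    simpl in Hx. revert Hx. apply gen_min; [apply gen_mod_subgroup; auto|].
    intros z [a [b [Ha [_ ->]]]].
    (* write a = y n with y in <lcs_gens i> and n in gamma_(i+1) *)
    destruct (IHi a Ha) as [y [Hy Ey]]. unfold cong in Ey.
    set (n := ginv y ** a) in *.
    replace a with (y ** n) by (unfold n; gsimpl; auto).
    apply (gen_mod_cong G N HN _ (commutator G y b)); [apply comm_gen_gen_mod; auto|].
    rewrite comm_mul_l. unfold cong.
    replace (ginv (commutator G y b) ** (conj n (commutator G y b) ** commutator G n b))
      with (ginv (commutator G y b) ** conj n (commutator G y b) ** commutator G n b)
      by (gsimpl; auto).
    apply subgroup_mul. apply lcs_subgroup.
    + apply lcs_conj_cong, lcs_comm, gen_lcs_gens_lcs; auto.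
    + apply lcs_comm. auto.
Qed.

Lemma fg_lcs_step (K : gset G) j U : subgroup G K -> (forall u, In u U -> K u) ->
  (forall x, K x -> lcs G (S j) x -> gen G (inL U) x) ->
  exists V, (forall u, In u V -> K u) /\ forall x, K x -> lcs G j x -> gen G (inL V) x.
Proof.
  intros HK HU1 HU2.
  destruct (fg_mod_central G (lcs G (S j)) (lcs_normal (S j)) (lcs_gens j))
    with (K := fun x => K x /\ lcs G j x) as [L [HL1 HL2]].
  - intros m Hm. apply lcs_central_mod, lcs_gens_lcs; auto.
  - apply subgroup_and; auto. apply lcs_subgroup.
  - intros x [_ Hx]. apply lcs_gen_mod; auto.
  - exists (L ++ U). split.
    + intros u Hu. apply in_app_or in Hu. destruct Hu; [apply HL1|apply HU1]; auto.
    + intros x Kx Hx. destruct (HL2 x (Logic.conj Kx Hx)) as [y [Hy Ey]].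
      assert (Ky : K y /\ lcs G j y).
      { revert Hy. apply (gen_min G (inL L) (fun z => K z /\ lcs G j z)); auto.
        apply subgroup_and; auto. apply lcs_subgroup. }
      (* x = y (y^-1 x) with y in <L> and y^-1 x in K and in gamma_(j+1) *)
      replace x with (y ** (ginv y ** x)) by (gsimpl; auto).
      apply gen_mul.
      * revert Hy. apply gen_incl. intros z Hz. apply in_or_app. auto.
      * assert (gen G (inL U) (ginv y ** x)) as HyU.
        { apply HU2; [|exact Ey]. apply subgroup_mul; auto. apply subgroup_inv; auto. apply Ky. }
        revert HyU. apply gen_incl. intros z Hz. apply in_or_app. auto.
Qed.

End LowerCentralSeries.

Theorem fg_nilpotent_subgroup_fg (G : group) : fin_gen G -> nilpotent G ->
  forall K : gset G, subgroup G K ->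
  exists L, (forall l, In l L -> K l) /\ forall x, K x -> gen G (inL L) x.
Proof.
  intros [gens Hgens] [c Hc] K HK.
  assert (Hdown : forall m, m <= c -> exists U, (forall u, In u U -> K u) /\
     forall x, K x -> lcs G (c - m) x -> gen G (inL U) x).
  { induction m; intro Hm.
    - exists []. split. intros u []. intros x _ Hx. rewrite Nat.sub_0_r in Hx.
      rewrite (Hc x Hx). apply gen_one.
    - destruct (IHm ltac:(lia)) as [U [HU1 HU2]].
      replace (c - m) with (S (c - S m)) in HU2 by lia.
      apply (fg_lcs_step G gens Hgens K _ U); auto. }
  destruct (Hdown c (le_n c)) as [U [HU1 HU2]]. exists U. split; auto.
  intros x Hx. apply HU2; auto. rewrite Nat.sub_diag. simpl. auto.
Qed.

Fixpoint vadd (c d : list Z) : list Z :=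
  match c, d with
  | x :: c', y :: d' => (x + y)%Z :: vadd c' d'
  | _, _ => []
  end.

Lemma vadd_length c d : length c = length d -> length (vadd c d) = length c.
Proof. revert d; induction c; destruct d; simpl; intros; try lia. rewrite IHc; lia. Qed.

Lemma map_fst_combine {A B : Type} (l : list A) (c : list B) :
  length l = length c -> map fst (combine l c) = l.
Proof. revert c; induction l; destruct c; simpl; intros; try lia; auto. f_equal. auto. Qed.

Section LinearCombinations.
Variable G : group.
Local Notation "x ** y" := (@gmul G x y) (at level 40, left associativity).
Local Notation "1" := (@gone G).
Implicit Types (a b x y z : G) (l : list G) (p : list (G * Z)) (c d : list Z).

Definition lin p : G := fold_right (fun q acc => gpowz (fst q) (snd q) ** acc) 1 p.
Definition allc l := forall y, In y l -> central y.

Lemma lin_cons a k p : lin ((a, k) :: p) = gpowz a k ** lin p. Proof. reflexivity. Qed.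

Lemma lin_central p : allc (map fst p) -> central (lin p).
Proof.
  induction p as [|[a k] p IH]; intro H; simpl.
  - apply central_one.
  - apply central_mul. apply central_gpowz. apply H; simpl; auto.
    apply IH. intros y Hy; apply H; simpl; auto.
Qed.

Lemma lin_perm p q : Permutation p q -> allc (map fst p) -> lin p = lin q.
Proof.
  intros Hp; induction Hp; intro Hc; simpl; auto.
  - f_equal. apply IHHp. intros y Hy; apply Hc; simpl; auto.
  - rewrite !gmulA. f_equal. apply central_gpowz. apply Hc. simpl. auto.
  - rewrite IHHp1; auto. apply IHHp2. intros z Hz. apply Hc.
    apply (Permutation_in (l := map fst l')). apply Permutation_map. symmetry; auto. auto.
Qed.

Lemma lin_zeros p : (forall q, In q p -> snd q = 0%Z) -> lin p = 1.
Proof.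
  induction p as [|[a k] p IH]; intro H; simpl; auto.
  rewrite IH by (intros; apply H; simpl; auto).
  replace k with 0%Z by (symmetry; apply (H (a, k)); simpl; auto). simpl. gsimpl. auto.
Qed.

Lemma allc_combine l c : allc l -> allc (map fst (combine l c)).
Proof.
  intros H y Hy. apply in_map_iff in Hy. destruct Hy as [[a k] [<- Hin]].
  apply in_combine_l in Hin. apply H; auto.
Qed.

Lemma lin_gen l c : gen G (inL l) (lin (combine l c)).
Proof.
  revert c; induction l as [|a l IH]; destruct c; simpl; try apply gen_one.
  apply gen_mul. apply subgroup_gpowz. apply gen_subgroup. apply gen_in. left; auto.
  generalize (IH c). apply gen_incl. intros y Hy; right; auto.
Qed.

Lemma subgroup_lin (S : gset G) l c :
  subgroup G S -> (forall y, In y l -> S y) -> S (lin (combine l c)).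
Proof. intros HS Hl. apply (gen_min G (inL l) S HS Hl). apply lin_gen. Qed.

Lemma lin_add l c d : allc l -> length c = length l -> length d = length l ->
  lin (combine l c) ** lin (combine l d) = lin (combine l (vadd c d)).
Proof.
  revert c d; induction l as [|a l IH]; intros c d Hl Hc Hd;
    destruct c as [|k c]; destruct d as [|m d]; simpl in *; try lia; gsimpl; auto.
  assert (Hl' : allc l) by (intros y Hy; apply Hl; simpl; auto).
  rewrite <- IH; try lia; auto. rewrite gpowz_add. gsimpl. f_equal.
  rewrite !gmulA. f_equal. apply lin_central. apply allc_combine; auto.
Qed.

Lemma lin_opp l c : allc l -> ginv (lin (combine l c)) = lin (combine l (map Z.opp c)).
Proof.
  revert c; induction l as [|a l IH]; intros c Hl; destruct c as [|k c]; simpl; gsimpl; auto.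
  assert (Hl' : allc l) by (intros y Hy; apply Hl; simpl; auto).
  rewrite <- IH, gpowz_opp; auto. apply central_inv. apply lin_central. apply allc_combine; auto.
Qed.

Lemma lin_zero l n : lin (combine l (repeat 0%Z n)) = 1.
Proof. revert n; induction l; destruct n; simpl; auto. rewrite IHl. gsimpl. auto. Qed.

Lemma unit_vec l y : In y l -> exists c, length c = length l /\ y = lin (combine l c).
Proof.
  induction l as [|a l IH]; intro Hin; [destruct Hin|]. destruct Hin as [<-|Hy].
  - exists (1%Z :: repeat 0%Z (length l)). split. simpl. rewrite repeat_length. auto.
    cbn [combine]. rewrite lin_cons, lin_zero, gpowz1. gsimpl. auto.
  - destruct (IH Hy) as [c [Hc E]]. exists (0%Z :: c). split. simpl. lia.
    cbn [combine]. rewrite lin_cons, <- E. simpl. gsimpl. auto.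
Qed.

Lemma gen_lin l x : allc l -> gen G (inL l) x ->
  exists c, length c = length l /\ x = lin (combine l c).
Proof.
  intros Hl Hx. induction Hx as [y Hy| |y z _ [c [Hc ->]] _ [d [Hd ->]]|y _ [c [Hc ->]]].
  - apply unit_vec; auto.
  - exists (repeat 0%Z (length l)). rewrite repeat_length, lin_zero. auto.
  - exists (vadd c d). rewrite vadd_length, lin_add; auto; lia.
  - exists (map Z.opp c). rewrite length_map, lin_opp; auto.
Qed.

Definition indep l :=
  forall c, length c = length l -> lin (combine l c) = 1 -> forall k, In k c -> k = 0%Z.

Lemma indep_unique l c d : allc l -> indep l -> length c = length l -> length d = length l ->
  lin (combine l c) = lin (combine l d) -> c = d.
Proof.
  intros Hl Hi Hc Hd E.
  assert (H0 : forall k, In k (vadd c (map Z.opp d)) -> k = 0%Z).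
  { apply Hi. rewrite vadd_length; rewrite ?length_map; lia.
    rewrite <- lin_add, <- lin_opp, E; auto; rewrite ?length_map; try lia. gsimpl. auto. }
  clear -Hc Hd H0. revert d Hc Hd H0. generalize (length l) as n. intro n. revert c.
  induction n; intros c d Hc Hd H0; destruct c as [|k c]; destruct d as [|m d];
    simpl in *; try lia; auto.
  f_equal. assert (k + - m = 0)%Z by (apply H0; auto). lia.
  apply (IHn c d); try lia. intros; apply H0; auto.
Qed.

(* Size of a relation, the measure decreased by the Euclidean reduction. *)
Fixpoint sumabs p : nat :=
  match p with [] => 0 | q :: p' => Z.abs_nat (snd q) + sumabs p' end.

Lemma sumabs_perm p q : Permutation p q -> sumabs p = sumabs q.
Proof. induction 1; simpl; lia. Qed.

Lemma nonzero_shape p : (exists q, In q p /\ snd q <> 0%Z) ->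
  (exists a k zs, Permutation p ((a, k) :: zs) /\ k <> 0%Z /\
     forall q, In q zs -> snd q = 0%Z) \/
  (exists a k b m r, Permutation p ((a, k) :: (b, m) :: r) /\ k <> 0%Z /\ m <> 0%Z /\
     (Z.abs m <= Z.abs k)%Z).
Proof.
  intros [q0 [Hq0 Hq0nz]].
  set (nz := fun q : G * Z => negb (Z.eqb (snd q) 0)).
  assert (Hperm : Permutation p (filter nz p ++ filter (fun q => negb (nz q)) p)).
  { clear. induction p as [|q p IH]; simpl; auto.
    destruct (nz q); simpl. constructor; auto. apply Permutation_cons_app. auto. }
  assert (Hnz : forall q, In q (filter nz p) -> snd q <> 0%Z).
  { intros q Hq. apply filter_In in Hq. unfold nz in Hq.
    destruct (Z.eqb_spec (snd q) 0); simpl in *; auto. destruct Hq; discriminate. }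
  assert (Hz : forall q, In q (filter (fun q => negb (nz q)) p) -> snd q = 0%Z).
  { intros q Hq. apply filter_In in Hq. unfold nz in Hq.
    destruct (Z.eqb_spec (snd q) 0); simpl in *; auto. destruct Hq as [_ Hq]; discriminate. }
  assert (Hq0' : In q0 (filter nz p)).
  { apply filter_In. split; auto. unfold nz. destruct (Z.eqb_spec (snd q0) 0); auto. }
  destruct (filter nz p) as [|[a k] [|[b m] r]] eqn:Eqs; [destruct Hq0'| |].
  - left. exists a, k, (filter (fun q => negb (nz q)) p). repeat split; auto.
    apply (Hnz (a, k)). simpl; auto.
  - right. assert (k <> 0%Z) by (apply (Hnz (a, k)); simpl; auto).
    assert (m <> 0%Z) by (apply (Hnz (b, m)); simpl; auto).
    destruct (Z_le_gt_dec (Z.abs m) (Z.abs k)).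
    + exists a, k, b, m, (r ++ filter (fun q => negb (nz q)) p). auto.
    + exists b, m, a, k, (r ++ filter (fun q => negb (nz q)) p). repeat split; auto; try lia.
      eapply Permutation_trans; [exact Hperm|]. simpl. apply perm_swap.
Qed.

(* One Euclidean step on the two leading coefficients k, m (|m| <= |k|):
   replacing b by b a^s, for the sign s making |k - s m| < |k|, keeps the
   value of the combination and the generated subgroup. *)
Definition euclid_sign (k m : Z) : Z :=
  if Bool.eqb (Z.ltb 0 k) (Z.ltb 0 m) then 1%Z else (-1)%Z.

Lemma euclid_lin a k b m r : central a -> central b ->
  lin ((a, (k - euclid_sign k m * m)%Z) :: (b ** gpowz a (euclid_sign k m), m) :: r) =
  lin ((a, k) :: (b, m) :: r).
Proof.
  intros Ha Hb. set (s := euclid_sign k m).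
  rewrite !lin_cons, gpowz_mul_comm by (apply central_commute; auto). rewrite <- gpowz_mul.
  assert (Hc : central (gpowz a (s * m))) by (apply central_gpowz; auto).
  rewrite <- (Hc (gpowz b m)). gsimpl. rewrite gmulA, <- gpowz_add.
  f_equal. f_equal. lia.
Qed.

Lemma euclid_sumabs a k b m r : k <> 0%Z -> m <> 0%Z -> (Z.abs m <= Z.abs k)%Z ->
  sumabs ((a, (k - euclid_sign k m * m)%Z) :: (b, m) :: r) <
  sumabs ((a, k) :: (b, m) :: r).
Proof.
  intros Hk Hm Hkm. cbn [sumabs snd]. unfold euclid_sign.
  destruct (Z.ltb_spec 0 k), (Z.ltb_spec 0 m); cbn [Bool.eqb];
    rewrite !Zabs2Nat.abs_nat_spec; lia.
Qed.

Lemma euclid_gen a b s l x :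
  gen G (inL (a :: b ** gpowz a s :: l)) x <-> gen G (inL (a :: b :: l)) x.
Proof.
  split; apply gen_sub; intros y [<-|[<-|Hy]]; try (apply gen_in; simpl; auto; fail).
  - apply gen_mul. apply gen_in; simpl; auto.
    apply subgroup_gpowz. apply gen_subgroup. apply gen_in; simpl; auto.
  - replace b with (b ** gpowz a s ** ginv (gpowz a s)) at 2 by (gsimpl; auto).
    apply gen_mul. apply gen_in; simpl; auto.
    apply gen_inv, (subgroup_gpowz G (gen G (inL (a :: b ** gpowz a s :: l)))).
    apply gen_subgroup. apply gen_in; simpl; auto.
Qed.

Section Reduction.
Variable S : gset G.
Hypothesis HS : subgroup G S.
Hypothesis TF : forall x k, S x -> k <> 0%Z -> gpowz x k = 1 -> x = 1.

Definition in_centre_S p := forall q, In q p -> central (fst q) /\ S (fst q).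

Definition shortens p := exists l', length l' < length p /\
  (forall y, In y l' -> central y /\ S y) /\
  (forall x, gen G (inL l') x <-> gen G (inL (map fst p)) x).

Lemma allc_in_centre_S p : in_centre_S p -> allc (map fst p).
Proof. intros Hp y Hy. apply in_map_iff in Hy. destruct Hy as [q [<- Hq]]. apply Hp; auto. Qed.

(* A relation a^k = 1 (k <> 0) forces a = 1 by torsion-freeness, and the
   generator a can be dropped. *)
Lemma shortens_single p a k zs : in_centre_S p -> Permutation p ((a, k) :: zs) -> k <> 0%Z ->
  (forall q, In q zs -> snd q = 0%Z) -> lin p = 1 -> shortens p.
Proof.
  intros Hp Hperm Hk Hzs Hlin.
  assert (Hin : forall q, In q ((a, k) :: zs) -> In q p)
    by (intros q Hq; apply (Permutation_in q (Permutation_sym Hperm)); auto).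
  assert (Ha : a = 1).
  { apply (TF a k); auto. apply (Hp (a, k)), Hin; simpl; auto.
    rewrite (lin_perm _ _ Hperm (allc_in_centre_S p Hp)), lin_cons, lin_zeros in Hlin; auto.
    gsimpl in Hlin. auto. }
  exists (map fst zs). split; [|split].
  - apply Permutation_length in Hperm. simpl in Hperm. rewrite length_map. lia.
  - intros y Hy. apply in_map_iff in Hy. destruct Hy as [q [<- Hq]].
    apply Hp, Hin. simpl; auto.
  - intro x. rewrite (gen_iff_perm _ (map fst p) (map fst ((a, k) :: zs)))
      by (apply Permutation_map; auto).
    simpl. split.
    + apply gen_incl. intros y Hy; right; auto.
    + apply gen_sub. intros y [<-|Hy]. subst a. apply gen_one. apply gen_in. auto.
Qed.

Lemma sumabs_pos p q : In q p -> snd q <> 0%Z -> 0 < sumabs p.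
Proof.
  induction p as [|q' p IH]; intros Hq Hq0; [destruct Hq|]. simpl.
  destruct Hq as [<-|Hq]; [lia|]. specialize (IH Hq Hq0). lia.
Qed.

(* A nontrivial relation among finitely many central elements of S lets us
   drop one generator: apply Euclidean steps until a single nonzero
   coefficient remains (induction on [sumabs]). *)
Lemma reduce n : forall p, sumabs p <= n -> in_centre_S p -> lin p = 1 ->
  (exists q, In q p /\ snd q <> 0%Z) -> shortens p.
Proof.
  induction n as [|n IH]; intros p Hn Hp Hlin Hnz.
  - exfalso. destruct Hnz as [q [Hq Hq0]]. pose proof (sumabs_pos p q Hq Hq0). lia.
  - destruct (nonzero_shape p Hnz)
      as [[a [k [zs [Hperm [Hk Hzs]]]]]|[a [k [b [m [r [Hperm [Hk [Hm Hkm]]]]]]]]].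
    + apply (shortens_single p a k zs); auto.
    + assert (Hin : forall q, In q ((a, k) :: (b, m) :: r) -> In q p)
        by (intros q Hq; apply (Permutation_in q (Permutation_sym Hperm)); auto).
      destruct (Hp (a, k)) as [Hac HaS]; [apply Hin; simpl; auto|].
      destruct (Hp (b, m)) as [Hbc HbS]; [apply Hin; simpl; auto|].
      set (s := euclid_sign k m).
      set (p' := (a, (k - s * m)%Z) :: (b ** gpowz a s, m) :: r).
      destruct (IH p') as [l' [Hl'1 [Hl'2 Hl'3]]].
      * rewrite (sumabs_perm _ _ Hperm) in Hn.
        pose proof (euclid_sumabs a k b m r Hk Hm Hkm). unfold p'. simpl in *. lia.
      * unfold p'. intros q [<-|[<-|Hq]]; simpl; auto.
        -- split. apply central_mul, central_gpowz; auto.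
           apply subgroup_mul, subgroup_gpowz; auto.
        -- apply Hp, Hin. simpl; auto.
      * unfold p', s. rewrite euclid_lin, <- (lin_perm _ _ Hperm (allc_in_centre_S p Hp)); auto.
      * exists (b ** gpowz a s, m). split; simpl; auto.
      * exists l'. split; [|split]; auto.
        -- apply Permutation_length in Hperm. unfold p' in Hl'1. simpl in *. lia.
        -- intro x. rewrite Hl'3, (gen_iff_perm _ (map fst p) (map fst ((a, k) :: (b, m) :: r)))
             by (apply Permutation_map; auto).
           apply euclid_gen.
Qed.

Lemma basis_exists n : forall l, length l <= n -> (forall y, In y l -> central y /\ S y) ->
  exists bs, (forall y, In y bs -> central y /\ S y) /\
    (forall x, gen G (inL bs) x <-> gen G (inL l) x) /\ indep bs.
Proof.
  induction n as [|n IH]; intros l Hn Hl.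
  - destruct l; simpl in Hn; try lia. exists []. split; [|split]. intros _ []. tauto.
    intros c Hc _ k Hk. destruct c; simpl in *; try lia; tauto.
  - destruct (classic (indep l)) as [Hi|Hni].
    + exists l. split; [|split]; auto. tauto.
    + unfold indep in Hni.
      assert (exists c, length c = length l /\ lin (combine l c) = 1 /\
                exists k, In k c /\ k <> 0%Z) as [c [Hc [Hlc [k [Hk Hk0]]]]].
      { apply NNPP. intro Hno. apply Hni. intros c Hc Hlc k Hk. apply NNPP. intro Hk0.
        apply Hno. exists c. eauto 6. }
      assert (Hmap : map fst (combine l c) = l) by (apply map_fst_combine; lia).
      destruct (reduce (sumabs (combine l c)) (combine l c)) as [l' [Hl'1 [Hl'2 Hl'3]]]; auto.
      * intros q Hq. destruct q as [y j]. simpl. apply in_combine_l in Hq. auto.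
      * destruct (In_nth c k 0%Z Hk) as [i [Hi Ei]]. exists (nth i l (@gone G), k).
        split; auto. rewrite <- Ei, <- combine_nth by lia. apply nth_In.
        rewrite length_combine. lia.
      * rewrite Hmap in Hl'3. rewrite length_combine in Hl'1.
        destruct (IH l') as [bs [Hb1 [Hb2 Hb3]]]; auto. lia.
        exists bs. split; [|split]; auto. intro x. rewrite Hb2. auto.
Qed.

End Reduction.

End LinearCombinations.

Fixpoint comm_prod (K : group) (w : nat) (f : nat -> K) : K :=
  match w with
  | 0 => gone
  | S w' => gmul (comm_prod K w' f) (commutator K (f (2 * w')) (f (2 * w' + 1)))
  end.

Definition is_comm_prod (K : group) (w : nat) (x : K) := exists f, x = comm_prod K w f.

(* x^E is a product of w commutators: a first-order, bounded version of
   membership in the isolator of G'. *)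
Definition bounded_isol (K : group) (w E : nat) (x : K) := is_comm_prod K w (gpow K x E).

Section CommutatorProducts.
Variable K : group.
Local Notation "x ** y" := (@gmul K x y) (at level 40, left associativity).
Local Notation "1" := (@gone K).
Implicit Types (x y z a b : K).

Lemma comm_prod_ext w f g : (forall i, i < 2 * w -> f i = g i) -> comm_prod K w f = comm_prod K w g.
Proof.
  induction w; intro H; auto. cbn [comm_prod]. rewrite IHw by (intros; apply H; lia).
  rewrite (H (2 * w)), (H (2 * w + 1)) by lia. auto.
Qed.

Lemma comm_prod_zero : is_comm_prod K 0 1.
Proof. exists (fun _ => 1). auto. Qed.

Lemma comm_prod_comm a b : is_comm_prod K 1 (commutator K a b).
Proof. exists (fun i => if Nat.eqb i 0 then a else b). simpl. gsimpl. auto. Qed.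

Lemma comm_prod_mul m n x y : is_comm_prod K m x -> is_comm_prod K n y -> is_comm_prod K (m + n) (x ** y).
Proof.
  revert y; induction n; intros y Hx [g ->].
  - simpl. gsimpl. rewrite Nat.add_0_r. auto.
  - cbn [comm_prod]. destruct (IHn (comm_prod K n g) Hx (ex_intro _ g eq_refl)) as [h Eh].
    (* append the last commutator of y after the 2(m+n) letters of h *)
    exists (fun i => if Nat.ltb i (2 * (m + n)) then h i
             else if Nat.eqb i (2 * (m + n)) then g (2 * n) else g (2 * n + 1)).
    rewrite gmulA, Eh, (Nat.add_succ_r m n). cbn [comm_prod]. f_equal.
    + apply comm_prod_ext. intros i Hi. destruct (Nat.ltb_spec i (2 * (m + n))); auto; lia.
    + destruct (Nat.ltb_spec (2 * (m + n)) (2 * (m + n))); try lia.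
      destruct (Nat.ltb_spec (2 * (m + n) + 1) (2 * (m + n))); try lia.
      rewrite Nat.eqb_refl. destruct (Nat.eqb_spec (2 * (m + n) + 1) (2 * (m + n))); auto; lia.
Qed.

Lemma comm_prod_inv w x : is_comm_prod K w x -> is_comm_prod K w (ginv x).
Proof.
  revert x; induction w; intros x [f ->].
  - exists f. simpl. apply ginv1.
  - cbn [comm_prod]. rewrite ginvM. replace (S w) with (1 + w) by lia. apply comm_prod_mul.
    + replace (ginv (commutator K (f (2 * w)) (f (2 * w + 1))))
        with (commutator K (f (2 * w + 1)) (f (2 * w))) by (unfold commutator; gsimpl; auto).
      apply comm_prod_comm.
    + apply IHw. exists f; auto.
Qed.

Lemma comm_prod_ones n : is_comm_prod K n 1.
Proof.
  induction n. apply comm_prod_zero. replace (S n) with (n + 1) by lia.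
  rewrite <- (comm_one_l K 1), <- (gmul1l K (commutator K 1 1)).
  apply comm_prod_mul; auto. apply comm_prod_comm.
Qed.

Lemma comm_prod_mono w w' x : is_comm_prod K w x -> w <= w' -> is_comm_prod K w' x.
Proof.
  intros H Hw. replace w' with (w + (w' - w)) by lia.
  rewrite <- (gmul1r K x). apply comm_prod_mul; auto. apply comm_prod_ones.
Qed.

Lemma comm_prod_pow w n x : is_comm_prod K w x -> is_comm_prod K (w * n) (gpow K x n).
Proof.
  intro H. induction n; simpl. rewrite Nat.mul_0_r. apply comm_prod_zero.
  replace (w * S n) with (w * n + w) by lia. apply comm_prod_mul; auto.
Qed.

Lemma comm_prod_derived w x : is_comm_prod K w x -> derived K x.
Proof.
  intros [f ->]. induction w. apply gen_one. cbn [comm_prod]. apply gen_mul; auto.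
  apply gen_in. exists (f (2 * w)), (f (2 * w + 1)). auto.
Qed.

Lemma derived_comm_prod x : derived K x -> exists w, is_comm_prod K w x.
Proof.
  intro H. induction H as [x [a [b [_ [_ ->]]]]| |x y _ [m Hm] _ [n Hn]|x _ [m Hm]].
  - exists (S 0). apply comm_prod_comm.
  - exists 0. apply comm_prod_zero.
  - exists (m + n). apply comm_prod_mul; auto.
  - exists m. apply comm_prod_inv; auto.
Qed.

Lemma bounded_isol_mul w w' E x y : commute x y ->
  bounded_isol K w E x -> bounded_isol K w' E y -> bounded_isol K (w + w') E (x ** y).
Proof. unfold bounded_isol. intros H H1 H2. rewrite gpow_mul_comm; auto. apply comm_prod_mul; auto. Qed.

Lemma bounded_isol_pow w E m x : bounded_isol K w E x -> bounded_isol K (w * m) (E * m) x.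
Proof. unfold bounded_isol. intro H. rewrite gpow_mul. apply comm_prod_pow; auto. Qed.

Lemma bounded_isol_mono w w' E x : bounded_isol K w E x -> w <= w' -> bounded_isol K w' E x.
Proof. unfold bounded_isol. apply comm_prod_mono. Qed.

Lemma bounded_isol_isolator w E x : 1 <= E -> bounded_isol K w E x -> isolator K (derived K) x.
Proof. intros HE H. exists E. split; auto. eapply comm_prod_derived; eauto. Qed.

Lemma bounded_isol_one w E : bounded_isol K w E 1.
Proof. unfold bounded_isol. rewrite gpow_one. apply comm_prod_ones. Qed.

End CommutatorProducts.

(* 0/1 vectors: subsets of {1..s} encoded as boolean lists. *)
Definition b2z (b : bool) : Z := if b then 1%Z else 0%Z.

Fixpoint bool_vectors (n : nat) : list (list bool) :=
  match n with
  | 0 => [[]]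
  | S n => map (cons true) (bool_vectors n) ++ map (cons false) (bool_vectors n)
  end.

Lemma bool_vectors_In n l : In l (bool_vectors n) <-> length l = n.
Proof.
  revert l; induction n; intro l; simpl.
  - split. intros [<-|[]]; auto. destruct l; simpl; try discriminate; auto.
  - rewrite in_app_iff, !in_map_iff. split.
    + intros [[l' [<- H]]|[l' [<- H]]]; simpl; f_equal; apply IHn; auto.
    + destruct l as [|b l]; simpl; intro H; try discriminate. injection H; intro H'.
      destruct b; [left|right]; exists l; split; auto; apply IHn; auto.
Qed.

Lemma bool_vectors_NoDup n : NoDup (bool_vectors n).
Proof.
  induction n; simpl. constructor. intros []. constructor.
  apply NoDup_app.
  - apply NoDup_map_inv with (f := @tl bool). rewrite map_map. simpl. rewrite map_id. auto.
  - apply NoDup_map_inv with (f := @tl bool). rewrite map_map. simpl. rewrite map_id. auto.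
  - intros x H1 H2. apply in_map_iff in H1, H2.
    destruct H1 as [? [<- _]]. destruct H2 as [? [H _]]. discriminate.
Qed.

Lemma bool_vectors_length n : length (bool_vectors n) = 2 ^ n.
Proof. induction n; simpl; auto. rewrite length_app, !length_map. lia. Qed.

Fixpoint bzip (f : bool -> bool -> bool) (l1 l2 : list bool) : list bool :=
  match l1, l2 with
  | x :: l1', y :: l2' => f x y :: bzip f l1' l2'
  | _, _ => []
  end.

Lemma bzip_length f l1 l2 : length l1 = length l2 -> length (bzip f l1 l2) = length l1.
Proof. revert l2; induction l1; destruct l2; simpl; intros; try lia. rewrite IHl1; lia. Qed.

Lemma b2z_split l1 l2 : length l1 = length l2 ->
  vadd (map b2z l1) (map b2z l2) =
  vadd (map b2z (bzip xorb l1 l2)) (vadd (map b2z (bzip andb l1 l2)) (map b2z (bzip andb l1 l2))).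
Proof.
  revert l2; induction l1 as [|x l1 IH]; destruct l2 as [|y l2]; simpl; intros; try lia; auto.
  f_equal. destruct x, y; reflexivity. apply IH. lia.
Qed.

Lemma bxor_nonzero l1 l2 : length l1 = length l2 -> l1 <> l2 ->
  existsb id (bzip xorb l1 l2) = true.
Proof.
  revert l2; induction l1 as [|x l1 IH]; destruct l2 as [|y l2]; simpl; intros Hl Hne; try lia.
  - congruence.
  - destruct x, y; simpl; auto; apply IH; try lia; congruence.
Qed.

Lemma even_split (c1 c2 : list Z) : length c1 = length c2 -> map Z.odd c1 = map Z.odd c2 ->
  vadd c1 c2 = vadd (map (fun t => t / 2)%Z (vadd c1 c2)) (map (fun t => t / 2)%Z (vadd c1 c2)).
Proof.
  revert c2; induction c1 as [|k1 c1 IH]; destruct c2 as [|k2 c2]; simpl; intros Hl Ho;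
    try lia; auto.
  injection Ho; intros Ho2 Ho1. f_equal.
  - pose proof (Z.div_mod (k1 + k2) 2). pose proof (Zmod_odd (k1 + k2)) as Hodd.
    rewrite Z.odd_add, Ho1 in Hodd. destruct (Z.odd k2); simpl in Hodd; lia.
  - apply IH; auto.
Qed.

Lemma vadd_split (c : list Z) :
  c = vadd (map (fun t => t mod 2)%Z c) (vadd (map (fun t => t / 2)%Z c) (map (fun t => t / 2)%Z c)).
Proof.
  induction c as [|k c IH]; simpl; auto. f_equal; auto.
  pose proof (Z.div_mod k 2). lia.
Qed.

Lemma zero_b2z (eps : list bool) (c : list Z) : length eps = length c ->
  (forall k, In k (vadd (map b2z eps) (vadd c c)) -> k = 0%Z) -> existsb id eps = false.
Proof.
  revert c; induction eps as [|x eps IH]; destruct c as [|k c];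
    cbn [length vadd map existsb]; intros Hl H; try lia; auto.
  assert (E : (b2z x + (k + k) = 0)%Z) by (apply H; left; auto).
  destruct x; unfold b2z in E; [lia|]. cbn [id orb]. apply (IH c). lia.
  intros; apply H; right; auto.
Qed.

Section Isolator.
Variable K : group.
Local Notation "x ** y" := (@gmul K x y) (at level 40, left associativity).
Local Notation "1" := (@gone K).
Local Notation Is := (isolator K (derived K)).
Local Notation II := (Iset K).
Implicit Types (x y z a b u : K).

Lemma derived_subgroup : subgroup K (derived K).
Proof. apply gen_subgroup. Qed.

Lemma isolator_one : Is 1.
Proof. exists 1%nat. split; auto. rewrite gpow_one. apply gen_one. Qed.
Lemma isolator_inv x : Is x -> Is (ginv x).
Proof. intros [k [Hk H]]. exists k. split; auto. rewrite gpow_inv. apply gen_inv; auto. Qed.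
Lemma isolator_mul x y : commute x y -> Is x -> Is y -> Is (x ** y).
Proof.
  intros Hx [k [Hk H1]] [l [Hl H2]]. exists (k * l). split. lia.
  rewrite gpow_mul_comm by (apply Hx). rewrite gpow_mul, (Nat.mul_comm k l), gpow_mul.
  apply gen_mul; apply subgroup_gpow; auto using derived_subgroup.
Qed.
Lemma isolator_cancel p q : central q -> Is q -> Is (p ** q) -> Is p.
Proof.
  intros Hq Iq Ipq. replace p with ((p ** q) ** ginv q) by (gsimpl; auto).
  apply isolator_mul; auto using isolator_inv.
  apply commute_sym, central_inv; auto.
Qed.

Lemma I_central x : II x -> central x.
Proof. intros [_ H]. exact H. Qed.

Lemma I_subgroup : subgroup K II.
Proof.
  split; [|split].
  - split. apply isolator_one. apply central_one.
  - intros x y [Ix Cx] [Iy Cy]. split. apply isolator_mul; auto. apply Cx. apply central_mul; auto.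
  - intros x [Ix Cx]. split. apply isolator_inv; auto. apply central_inv; auto.
Qed.

Lemma isol_bounds_list U : (forall u, In u U -> Is u) ->
  exists w E, 1 <= E /\ forall u, In u U -> bounded_isol K w E u.
Proof.
  induction U as [|u U IH]; intro HU.
  - exists 0, 1%nat. split; auto. intros u [].
  - destruct IH as [w1 [E1 [HE1 H1]]]. intros; apply HU; simpl; auto.
    destruct (HU u (or_introl eq_refl)) as [k [Hk Hder]].
    destruct (derived_comm_prod K _ Hder) as [w2 Hw2].
    exists (w1 * k + w2 * E1), (E1 * k). split. nia.
    intros u' [<-|Hu'].
    + apply bounded_isol_mono with (w2 * E1); [|lia].
      rewrite (Nat.mul_comm E1 k). apply bounded_isol_pow. exact Hw2.
    + apply bounded_isol_mono with (w1 * k); [|lia]. apply bounded_isol_pow. auto.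
Qed.

Lemma lin01_bounded w E U eps : allc K U -> (forall u, In u U -> bounded_isol K w E u) ->
  (forall k, In k eps -> k = 0%Z \/ k = 1%Z) ->
  bounded_isol K (w * length U) E (lin K (combine U eps)).
Proof.
  revert eps; induction U as [|u U IH]; intros eps HC HD He; destruct eps as [|k eps]; simpl.
  - apply bounded_isol_one.
  - apply bounded_isol_one.
  - apply bounded_isol_mono with 0; [apply bounded_isol_one|lia].
  - replace (w * S (length U)) with (w + w * length U) by lia.
    apply bounded_isol_mul.
    + apply central_commute, central_gpowz, HC; simpl; auto.
    + destruct (He k (or_introl eq_refl)) as [->| ->].
      * apply bounded_isol_mono with 0; [apply bounded_isol_one|lia].
      * rewrite gpowz1. apply HD; simpl; auto.
    + apply IH.
      * intros y Hy. apply HC. simpl; auto.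
      * intros y Hy. apply HD. simpl; auto.
      * intros j Hj. apply He. simpl; auto.
Qed.

Definition good_bound (w E : nat) :=
  1 <= E /\ forall u, II u -> exists y, central y /\ bounded_isol K w E (u ** y ** y).

(* In a finitely generated nilpotent group I(G) is finitely generated, so a
   good bound exists: modulo squares every element of I(G) is a 0/1
   combination of the finitely many generators. *)
Lemma good_bound_exists : fin_gen K -> nilpotent K -> exists w E, good_bound w E.
Proof.
  intros Hfg Hnil.
  destruct (fg_nilpotent_subgroup_fg K Hfg Hnil II I_subgroup) as [U [HU1 HU2]].
  assert (HC : allc K U) by (intros y Hy; apply I_central; auto).
  destruct (isol_bounds_list U) as [w [E [HE HD]]]. intros; apply HU1; auto.
  exists (w * length U), E. split; auto.
  intros u Hu. destruct (gen_lin K U u HC (HU2 u Hu)) as [c [Hc ->]].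
  set (e := map (fun t : Z => t mod 2)%Z c). set (h := map (fun t : Z => t / 2)%Z c).
  assert (He : length e = length U) by (unfold e; rewrite length_map; auto).
  assert (Hh : length h = length U) by (unfold h; rewrite length_map; auto).
  exists (ginv (lin K (combine U h))). split.
  - apply central_inv, lin_central, allc_combine; auto.
  - rewrite (vadd_split c). fold e h.
    rewrite <- lin_add, <- lin_add; auto; try (rewrite vadd_length; lia).
    gsimpl. apply lin01_bounded; auto.
    intros k Hk. unfold e in Hk. apply in_map_iff in Hk. destruct Hk as [z [<- _]].
    pose proof (Z.mod_pos_bound z 2). lia.
Qed.

End Isolator.

Definition rank_prop (K : group) (s w E : nat) : Prop :=
  exists z : list K, length z = s /\ (forall y, In y z -> central y) /\
    forall eps, In eps (bool_vectors s) -> existsb id eps = true -> forall y, central y ->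
      ~ bounded_isol K w E (gmul (gmul (lin K (combine z (map b2z eps))) y) y).

Section Addition.
Variable K : group.
Local Notation "x ** y" := (@gmul K x y) (at level 40, left associativity).
Local Notation "1" := (@gone K).
Implicit Types (x y z a b u : K).
Variable K0 : gset K.
Hypothesis Hadd : addition K K0.

Local Notation Is := (isolator K (derived K)).
Local Notation II := (Iset K).

Lemma addition_subgroup : subgroup K K0.
Proof. apply Hadd. Qed.
Lemma addition_central x : K0 x -> central x.
Proof. apply Hadd. Qed.
Lemma addition_meet_I x : K0 x -> II x -> x = 1.
Proof. apply Hadd. Qed.
Lemma centre_decomp z : central z -> exists a u, K0 a /\ II u /\ z = a ** u.
Proof. intro H. apply Hadd. exact H. Qed.

(* An addition is torsion-free: a torsion element lies in I(G). *)
Lemma addition_torsion_free x k : K0 x -> k <> 0%Z -> gpowz x k = 1 -> x = 1.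
Proof.
  intros Hx Hk E. apply addition_meet_I; auto. split; [|apply addition_central; auto].
  exists (Z.to_nat (Z.abs k)). split. lia.
  rewrite <- gpowz_nat. replace (Z.of_nat (Z.to_nat (Z.abs k))) with (Z.abs k) by lia.
  destruct (Z_le_gt_dec 0 k).
  - rewrite Z.abs_eq by lia. rewrite E. apply gen_one.
  - rewrite Z.abs_neq by lia. rewrite gpowz_opp, E, ginv1. apply gen_one.
Qed.

Definition is_basis (e : list K) :=
  (forall y, In y e -> central y /\ K0 y) /\ indep K e /\
  (forall x, K0 x -> exists c, length c = length e /\ x = lin K (combine e c)).

(* In a finitely generated nilpotent group an addition is finitely generated
   and torsion-free, hence free abelian of finite rank. *)
Lemma addition_basis : fin_gen K -> nilpotent K -> exists e, is_basis e.
Proof.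
  intros Hfg Hnil.
  destruct (fg_nilpotent_subgroup_fg K Hfg Hnil K0 addition_subgroup) as [L [HL1 HL2]].
  destruct (basis_exists K K0 addition_subgroup addition_torsion_free (length L) L (le_n _))
    as [bs [Hb1 [Hb2 Hb3]]].
  { intros y Hy. split; auto. apply addition_central; auto. }
  exists bs. split; [|split]; auto.
  intros x Hx. apply gen_lin. intros y Hy; apply Hb1; auto. apply Hb2. auto.
Qed.

Lemma basis_allc e : is_basis e -> allc K e.
Proof. intros [He _] y Hy. apply He; auto. Qed.

Definition coord (e : list K) (x : K) : list Z :=
  epsilon (inhabits []) (fun c => length c = length e /\ x = lin K (combine e c)).

Lemma coord_spec e x : is_basis e -> K0 x ->
  length (coord e x) = length e /\ x = lin K (combine e (coord e x)).
Proof.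
  intros [_ [_ He]] Hx. unfold coord.
  apply (epsilon_spec (inhabits []) (fun c => length c = length e /\ x = lin K (combine e c))).
  apply He; auto.
Qed.

Lemma isolated_square L y : K0 L -> central y -> Is (L ** y ** y) ->
  exists a, K0 a /\ L ** a ** a = 1.
Proof.
  intros HL Hy HD.
  destruct (centre_decomp y Hy) as [a [u [Ha [Hu ->]]]].
  assert (Hac : central a) by (apply addition_central; auto).
  assert (Huc : central u) by (apply I_central; auto).
  assert (HLc : central L) by (apply addition_central; auto).
  replace (L ** (a ** u) ** (a ** u)) with ((L ** a ** a) ** (u ** u)) in HD
    by (gsimpl; f_equal; f_equal; apply mul_central_swap; auto).
  (* cancel the I(G)-part u^2, leaving an element of K0 in the isolator *)
  apply isolator_cancel in HD;
    [| apply central_mul; auto | apply isolator_mul; [reflexivity|apply Hu|apply Hu]].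
  pose proof addition_subgroup as HK0.
  exists a. split; auto. apply addition_meet_I.
  - apply subgroup_mul; [|apply subgroup_mul|]; auto.
  - split; auto. apply central_mul; [apply central_mul|]; auto.
Qed.

Lemma basis_rank_prop e w E : is_basis e -> 1 <= E -> rank_prop K (length e) w E.
Proof.
  intros Hb HE. pose proof Hb as [He1 [He2 He3]].
  exists e. split; auto. split. intros y Hy; apply He1; auto.
  intros eps Heps Hex y Hy HD. apply bool_vectors_In in Heps.
  set (L := lin K (combine e (map b2z eps))) in *.
  assert (HL : K0 L) by (apply subgroup_lin; [apply addition_subgroup|intros; apply He1; auto]).
  apply bounded_isol_isolator in HD; auto.
  destruct (isolated_square L y HL Hy HD) as [a [Ha Hp]].
  destruct (He3 a Ha) as [c [Hc ->]].
  (* eps + 2c is a trivial relation, so eps = 0 *)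
  assert (Hl : forall k, In k (vadd (map b2z eps) (vadd c c)) -> k = 0%Z).
  { assert (Hlen1 : length (map b2z eps) = length e) by (rewrite length_map; lia).
    assert (Hlen2 : length (vadd c c) = length e) by (rewrite vadd_length; lia).
    apply He2. rewrite vadd_length; lia.
    rewrite <- (lin_add K e (map b2z eps) (vadd c c)), <- (lin_add K e c c)
      by (auto using basis_allc).
    rewrite <- Hp. unfold L. gsimpl. auto. }
  apply zero_b2z in Hl; [congruence | lia].
Qed.

Lemma decomp_list zl : allc K zl -> exists al ul,
  length al = length zl /\ length ul = length zl /\
  (forall x, In x al -> K0 x) /\ (forall x, In x ul -> II x) /\
  forall c, lin K (combine zl c) = lin K (combine al c) ** lin K (combine ul c).
Proof.
  induction zl as [|z0 zl IH]; intro Hz.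
  - exists [], []. split; [|split; [|split; [|split]]]; auto; try (intros _ []).
    intros c. destruct c; simpl; gsimpl; auto.
  - destruct IH as [al [ul [H1 [H2 [H3 [H4 H5]]]]]]. intros y Hy; apply Hz; simpl; auto.
    destruct (centre_decomp z0 (Hz z0 (or_introl eq_refl))) as [a0 [u0 [Ha0 [Hu0 E0]]]].
    exists (a0 :: al), (u0 :: ul). split; [simpl; lia|]. split; [simpl; lia|]. split; [|split].
    + intros x [<-|Hx]; auto.
    + intros x [<-|Hx]; auto.
    + intros [|k c]; simpl. gsimpl; auto.
      rewrite H5, E0, gpowz_mul_comm.
      * gsimpl. f_equal. symmetry. apply mul_central_swap.
        apply central_gpowz, I_central; auto.
      * apply central_commute, addition_central; auto.
Qed.

Section Parity.
Variables (e al : list K).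
Hypothesis Hb : is_basis e.
Hypothesis Hal : forall x, In x al -> K0 x.

Let sub_sum (eps : list bool) : K := lin K (combine al (map b2z eps)).

Let sub_sum_K0 eps : K0 (sub_sum eps).
Proof. apply subgroup_lin; auto. apply addition_subgroup. Qed.

Lemma square_from_collision e1 e2 : length e1 = length al -> length e2 = length al ->
  e1 <> e2 -> map Z.odd (coord e (sub_sum e1)) = map Z.odd (coord e (sub_sum e2)) ->
  exists b, K0 b /\ sub_sum (bzip xorb e1 e2) = b ** b.
Proof.
  intros H1 H2 Hne Hf. pose proof Hb as [He1 [He2 He3]].
  assert (HeC := basis_allc e Hb).
  assert (HaC : allc K al) by (intros y Hy; apply addition_central; auto).
  destruct (coord_spec e (sub_sum e1) Hb (sub_sum_K0 e1)) as [Hc1 Ex1].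
  destruct (coord_spec e (sub_sum e2) Hb (sub_sum_K0 e2)) as [Hc2 Ex2].
  set (c1 := coord e (sub_sum e1)) in *. set (c2 := coord e (sub_sum e2)) in *.
  set (h := map (fun t => t / 2)%Z (vadd c1 c2)).
  assert (Hh : length h = length e) by (unfold h; rewrite length_map, vadd_length; lia).
  set (g := lin K (combine e h)).
  set (m := sub_sum (bzip andb e1 e2)).
  (* the sum of the two subset sums is g^2 (even coordinates) ... *)
  assert (Hg : sub_sum e1 ** sub_sum e2 = g ** g).
  { rewrite Ex1, Ex2 at 1. rewrite lin_add; auto. unfold g. rewrite lin_add; auto.
    f_equal. f_equal. apply even_split; auto. lia. }
  (* ... and also the xor-sum times m^2 *)
  assert (Hm : sub_sum e1 ** sub_sum e2 = sub_sum (bzip xorb e1 e2) ** (m ** m)).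
  { unfold m, sub_sum. rewrite !lin_add; rewrite ?vadd_length, ?length_map, ?bzip_length;
      try lia; auto.
    f_equal. f_equal. apply b2z_split. lia. }
  exists (g ** ginv m). split.
  - apply subgroup_mul. apply addition_subgroup.
    + apply subgroup_lin. apply addition_subgroup. intros; apply He1; auto.
    + apply subgroup_inv. apply addition_subgroup. apply sub_sum_K0.
  - assert (Hmc : central m) by (apply addition_central; apply sub_sum_K0).
    apply (gmul_cancel_r _ (m ** m)). rewrite <- Hm, Hg. gsimpl. f_equal.
    rewrite <- (Hmc g). gsimpl. auto.
Qed.

(* Pigeonhole: more than rank-many elements of K0 admit a nonempty subset
   whose sum is a square in K0 (there are 2^|al| subsets but only 2^|e|
   coordinate parity patterns). *)
Lemma square_subsum : length e < length al ->
  exists eps, In eps (bool_vectors (length al)) /\ existsb id eps = true /\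
    exists b, K0 b /\ sub_sum eps = b ** b.
Proof.
  intros Hlt.
  set (f := fun eps => map Z.odd (coord e (sub_sum eps))).
  destruct (classic (exists e1 e2, In e1 (bool_vectors (length al)) /\
      In e2 (bool_vectors (length al)) /\ e1 <> e2 /\ f e1 = f e2))
    as [[e1 [e2 [H1 [H2 [Hne Hf]]]]]|Hno].
  - apply bool_vectors_In in H1. apply bool_vectors_In in H2.
    exists (bzip xorb e1 e2). split; [|split].
    + apply bool_vectors_In. rewrite bzip_length; lia.
    + apply bxor_nonzero; auto. lia.
    + apply square_from_collision; auto.
  - exfalso.
    assert (HND : NoDup (map f (bool_vectors (length al)))).
    { apply NoDup_map_NoDup_ForallPairs; [|apply bool_vectors_NoDup].
      intros x y Hx Hy Exy. apply NNPP. intro Hne. apply Hno. exists x, y. auto. }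
    assert (Hinc : incl (map f (bool_vectors (length al))) (bool_vectors (length e))).
    { intros l Hl. apply in_map_iff in Hl. destruct Hl as [eps [<- _]]. apply bool_vectors_In.
      unfold f. rewrite length_map. apply coord_spec; auto. }
    pose proof (NoDup_incl_length HND Hinc) as Hlen.
    rewrite length_map, !bool_vectors_length in Hlen.
    pose proof (Nat.pow_lt_mono_r 2 (length e) (length al) ltac:(lia) Hlt). lia.
Qed.

End Parity.

(* With a good bound (w, E), [rank_prop s w E] forces s <= rank: otherwise
   decompose the witnesses along K0 x I(G), find a nonempty subset whose
   K0-part is a square, and absorb its I(G)-part by the good bound. *)
Lemma rank_prop_le_basis e s w E : is_basis e -> good_bound K w E ->
  rank_prop K s w E -> s <= length e.
Proof.
  intros Hb [_ Hbd] [zl [Hzl [Hzc HPhi]]]. apply NNPP. intro Hlt.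
  destruct (decomp_list zl Hzc) as [al [ul [Ha1 [Hu1 [Ha2 [Hu2 Hlin]]]]]].
  destruct (square_subsum e al Hb Ha2) as [eps [Heps [Hex [b [Hb0 Eb]]]]]. lia.
  rewrite Ha1, Hzl in Heps.
  set (U := lin K (combine ul (map b2z eps))).
  assert (HU : II U) by (apply subgroup_lin; auto; apply I_subgroup).
  destruct (Hbd U HU) as [y' [Hy' HD]].
  assert (Hbc : central b) by (apply addition_central; auto).
  assert (Hbi : central (ginv b)) by (apply central_inv; auto).
  assert (HUc : central U) by (apply I_central; auto).
  apply (HPhi eps Heps Hex (ginv b ** y')). apply central_mul; auto.
  replace (lin K (combine zl (map b2z eps)) ** (ginv b ** y') ** (ginv b ** y'))
    with (U ** y' ** y'); auto.
  rewrite Hlin, Eb. fold U. gsimpl.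
  rewrite (mul_central_swap K (ginv b) U) by auto. gsimpl.
  rewrite (mul_central_swap K (ginv b) y') by auto.
  rewrite (mul_central_swap K (ginv b) U) by auto. gsimpl. auto.
Qed.

End Addition.

Definition override (K : group) (v : nat -> K) (k m : nat) (f : nat -> K) : nat -> K :=
  fun i => if andb (Nat.leb k i) (Nat.ltb i (k + m)) then f i else v i.

Lemma override_in K v k m f i : k <= i < k + m -> override K v k m f i = f i.
Proof.
  intro H. unfold override. destruct (Nat.leb_spec k i), (Nat.ltb_spec i (k + m)); auto; lia.
Qed.

Lemma override_out K v k m f i : i < k \/ k + m <= i -> override K v k m f i = v i.
Proof.
  intro H. unfold override. destruct (Nat.leb_spec k i), (Nat.ltb_spec i (k + m)); auto; lia.
Qed.

Definition exists_many (l : list nat) (p : formula) : formula := fold_right FEx p l.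

Lemma sat_exists_many K v k m p :
  sat K v (exists_many (seq k m) p) <-> exists f, sat K (override K v k m f) p.
Proof.
  revert k v; induction m; intros k v; simpl.
  - assert (Hov : forall f, override K v k 0 f = v).
    { intro f. apply functional_extensionality; intro i. apply override_out. lia. }
    split. intro H. exists v. rewrite Hov. auto. intros [f H]. rewrite Hov in H. auto.
  - (* the first variable k is bound by FEx, the others by the induction *)
    assert (Hov : forall f, override K (upd K v k (f k)) (S k) m f = override K v k (S m) f).
    { intro f. apply functional_extensionality; intro i. unfold override, upd.
      destruct (Nat.eqb_spec i k), (Nat.leb_spec (S k) i), (Nat.ltb_spec i (S k + m)),
        (Nat.leb_spec k i), (Nat.ltb_spec i (k + S m)); simpl; subst; auto; lia. }
    split.
    + intros [a H]. apply IHm in H. destruct H as [f H].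
      exists (fun i => if Nat.eqb i k then a else f i). rewrite <- Hov. rewrite Nat.eqb_refl.
      replace (override K (upd K v k a) (S k) m (fun i => if Nat.eqb i k then a else f i))
        with (override K (upd K v k a) (S k) m f); auto.
      apply functional_extensionality; intro i. unfold override.
      destruct (Nat.eqb_spec i k), (Nat.leb_spec (S k) i); simpl; auto; lia.
    + intros [f H]. exists (f k). apply IHm. exists f. rewrite Hov. auto.
Qed.

Lemma free_exists_many x l p : free_in x (exists_many l p) -> free_in x p /\ ~ In x l.
Proof.
  induction l; simpl; intro H. split; auto.
  destruct H as [Hne H]. apply IHl in H. destruct H. split; auto. intros [<-|Hin]; auto.
Qed.

Fixpoint big_and (l : list formula) : formula :=
  match l with [] => FNot FFalse | p :: l' => FAnd p (big_and l') end.

Lemma sat_big_and K v l : sat K v (big_and l) <-> forall p, In p l -> sat K v p.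
Proof.
  induction l as [|q l IH]; simpl.
  - split. intros _ p []. intros _ H; exact H.
  - rewrite IH. split. intros [H1 H2] p [<-|Hp]; auto. intro H; split; auto.
Qed.

Lemma free_big_and x l : free_in x (big_and l) -> exists p, In p l /\ free_in x p.
Proof. induction l as [|q l IH]; simpl. tauto. intros [H|H]; eauto. destruct (IH H) as [p [? ?]]; eauto. Qed.

Lemma teval_ext K v v' t : (forall x, tvar_in x t -> v x = v' x) -> teval K v t = teval K v' t.
Proof. induction t; simpl; intros; auto; f_equal; auto. Qed.

Definition central_formula (t i : nat) : formula :=
  FAll t (FEq (TMul (TVar i) (TVar t)) (TMul (TVar t) (TVar i))).

Lemma sat_central_formula K v t i : i <> t -> (sat K v (central_formula t i) <-> central (v i)).
Proof.
  intro H. unfold central_formula. simpl. unfold upd.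
  rewrite (proj2 (Nat.eqb_neq i t) H), Nat.eqb_refl. split; intros H1 a; apply H1.
Qed.

Lemma free_central_formula x t i : free_in x (central_formula t i) -> x = i.
Proof. simpl. intros [Hne [[H|H]|[H|H]]]; congruence. Qed.

Fixpoint comm_prod_term (w k : nat) : term :=
  match w with
  | 0 => TOne
  | S w' => TMul (comm_prod_term w' k)
      (TMul (TMul (TInv (TVar (k + 2 * w'))) (TInv (TVar (k + 2 * w' + 1))))
            (TMul (TVar (k + 2 * w')) (TVar (k + 2 * w' + 1))))
  end.

Lemma teval_comm_prod_term K v w k :
  teval K v (comm_prod_term w k) = comm_prod K w (fun i => v (k + i)).
Proof.
  induction w. reflexivity. cbn [comm_prod_term teval comm_prod]. rewrite IHw.
  unfold commutator. rewrite (Nat.add_assoc k (2 * w) 1). reflexivity.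
Qed.

Lemma tvar_comm_prod_term x w k : tvar_in x (comm_prod_term w k) -> k <= x < k + 2 * w.
Proof. induction w; simpl. tauto. intros [H|[[H|H]|[H|H]]]; try (apply IHw in H); lia. Qed.

Fixpoint pow_term (t : term) (n : nat) : term :=
  match n with 0 => TOne | S n' => TMul (pow_term t n') t end.

Lemma teval_pow_term K v t n : teval K v (pow_term t n) = gpow K (teval K v t) n.
Proof. induction n; simpl; auto. rewrite IHn. auto. Qed.

Lemma tvar_pow_term x t n : tvar_in x (pow_term t n) -> tvar_in x t.
Proof. induction n; simpl; tauto. Qed.

(* [bounded_isol w E t], quantifying the 2w commutator letters as the
   variables s+2, ..., s+2w+1 (t must only use variables below s + 2). *)
Definition bounded_isol_formula (s w E : nat) (t : term) : formula :=
  exists_many (seq (s + 2) (2 * w)) (FEq (pow_term t E) (comm_prod_term w (s + 2))).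

Lemma sat_bounded_isol_formula K v s w E t : (forall x, tvar_in x t -> x < s + 2) ->
  (sat K v (bounded_isol_formula s w E t) <-> bounded_isol K w E (teval K v t)).
Proof.
  intro Ht. unfold bounded_isol_formula. rewrite sat_exists_many. cbn [sat].
  unfold bounded_isol, is_comm_prod.
  assert (Hev : forall f, teval K (override K v (s + 2) (2 * w) f) t = teval K v t).
  { intro f. apply teval_ext. intros x Hx. apply override_out. specialize (Ht x Hx). lia. }
  assert (Hletters : forall f g, (forall i, i < 2 * w -> f (s + 2 + i) = g i) ->
      comm_prod K w (fun i => override K v (s + 2) (2 * w) f (s + 2 + i)) = comm_prod K w g).
  { intros f g Hfg. apply comm_prod_ext. intros i Hi. rewrite override_in by lia. auto. }
  setoid_rewrite teval_pow_term. setoid_rewrite teval_comm_prod_term. setoid_rewrite Hev.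
  split.
  - intros [f H]. exists (fun i => f (s + 2 + i)). rewrite H. apply Hletters. auto.
  - intros [g H]. exists (fun i => g (i - (s + 2))). rewrite H. symmetry. apply Hletters.
    intros i _. f_equal. lia.
Qed.

Lemma free_bounded_isol_formula x s w E t :
  free_in x (bounded_isol_formula s w E t) -> tvar_in x t.
Proof.
  unfold bounded_isol_formula. intro H. apply free_exists_many in H.
  destruct H as [[H|H] Hn]; simpl in H.
  - apply tvar_pow_term in H. auto.
  - apply tvar_comm_prod_term in H. exfalso. apply Hn. apply in_seq. lia.
Qed.

Fixpoint subset_prod_term (eps : list bool) (k : nat) : term :=
  match eps with
  | [] => TOne
  | b :: e => TMul (if b then TVar k else TOne) (subset_prod_term e (S k))
  end.

Lemma teval_subset_prod_term K v eps k :
  teval K v (subset_prod_term eps k) = lin K (combine (map v (seq k (length eps))) (map b2z eps)).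
Proof.
  revert k; induction eps as [|b eps IH]; intro k; simpl; auto.
  rewrite IH. f_equal. destruct b; simpl; gsimpl; auto.
Qed.

Lemma tvar_subset_prod_term x eps k :
  tvar_in x (subset_prod_term eps k) -> k <= x < k + length eps.
Proof.
  revert k; induction eps as [|b eps IH]; intro k; simpl. tauto.
  intros [H|H]. destruct b; simpl in H; [lia|tauto]. apply IH in H. lia.
Qed.

(* For the subset eps of the variables 0..s-1:
   "for all central y (variable s), (prod_eps z_i) y y is not bounded". *)
Definition rank_clause (s w E : nat) (eps : list bool) : formula :=
  FAll s (FImp (central_formula (s + 1) s)
    (FNot (bounded_isol_formula s w E
             (TMul (TMul (subset_prod_term eps 0) (TVar s)) (TVar s))))).

Definition rank_sentence (s w E : nat) : formula :=
  exists_many (seq 0 s)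
    (FAnd (big_and (map (central_formula (s + 1)) (seq 0 s)))
          (big_and (map (rank_clause s w E) (filter (existsb id) (bool_vectors s))))).

Lemma rank_sentence_closed s w E : sentence (rank_sentence s w E).
Proof.
  intros x H. unfold rank_sentence in H. apply free_exists_many in H. destruct H as [H Hx].
  assert (Hs : s <= x) by (destruct (le_lt_dec s x); auto; exfalso; apply Hx; apply in_seq; lia).
  simpl in H. destruct H as [H|H]; apply free_big_and in H; destruct H as [p [Hp Hf]];
    apply in_map_iff in Hp.
  - destruct Hp as [i [<- Hi]]. apply free_central_formula in Hf. apply in_seq in Hi. lia.
  - destruct Hp as [eps [<- Heps]]. apply filter_In in Heps. destruct Heps as [Heps _].
    apply bool_vectors_In in Heps.
    unfold rank_clause in Hf. simpl in Hf. destruct Hf as [Hne [Hf|Hf]].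
    + apply free_central_formula in Hf. lia.
    + apply free_bounded_isol_formula in Hf. simpl in Hf. destruct Hf as [[Hf|Hf]|Hf].
      * apply tvar_subset_prod_term in Hf. lia.
      * lia.
      * lia.
Qed.

Lemma sat_rank_clause K rho s w E eps : length eps = s ->
  sat K rho (rank_clause s w E eps) <->
  forall y, central y ->
    ~ bounded_isol K w E (gmul (gmul (lin K (combine (map rho (seq 0 s)) (map b2z eps))) y) y).
Proof.
  intro Heps. unfold rank_clause. cbn [sat].
  assert (Hz : forall y, map (upd K rho s y) (seq 0 (length eps)) = map rho (seq 0 s)).
  { intro y. rewrite Heps. apply map_ext_in. intros i Hi. apply in_seq in Hi. unfold upd.
    destruct (Nat.eqb_spec i s); auto; lia. }
  assert (Hcent : forall y, sat K (upd K rho s y) (central_formula (s + 1) s) <-> central y).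
  { intro y. rewrite sat_central_formula by lia. unfold upd. rewrite Nat.eqb_refl. tauto. }
  assert (Hvars : forall x, tvar_in x (TMul (TMul (subset_prod_term eps 0) (TVar s)) (TVar s)) ->
      x < s + 2).
  { intros x Hx. simpl in Hx. destruct Hx as [[Hx|Hx]|Hx]; try lia.
    apply tvar_subset_prod_term in Hx. lia. }
  assert (Hval : forall y, teval K (upd K rho s y)
      (TMul (TMul (subset_prod_term eps 0) (TVar s)) (TVar s)) =
      gmul (gmul (lin K (combine (map rho (seq 0 s)) (map b2z eps))) y) y).
  { intro y. cbn [teval]. rewrite teval_subset_prod_term, Hz. unfold upd.
    rewrite Nat.eqb_refl. auto. }
  split; intros H y Hy HD.
  - apply (H y (proj2 (Hcent y) Hy)). rewrite sat_bounded_isol_formula, Hval; auto.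
  - apply (H y (proj1 (Hcent y) Hy)). rewrite sat_bounded_isol_formula, Hval in HD; auto.
Qed.

Lemma map_nth_seq {A : Type} (z : list A) d : map (fun i => nth i z d) (seq 0 (length z)) = z.
Proof.
  induction z as [|a z IH]; simpl; auto. f_equal. rewrite <- seq_shift, map_map. simpl. auto.
Qed.

(* The sentence expresses [rank_prop]: the witnesses z are the values of the
   variables 0..s-1. *)
Lemma sat_rank_sentence K v s w E : sat K v (rank_sentence s w E) <-> rank_prop K s w E.
Proof.
  unfold rank_sentence, rank_prop. rewrite sat_exists_many. cbn [sat].
  (* the body, for the valuation rho, says rank_prop with z = rho 0, ..., rho (s-1) *)
  assert (Hbody : forall rho, (sat K rho (big_and (map (central_formula (s + 1)) (seq 0 s))) /\
      sat K rho (big_and (map (rank_clause s w E) (filter (existsb id) (bool_vectors s))))) <->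
      (forall y, In y (map rho (seq 0 s)) -> central y) /\
      forall eps, In eps (bool_vectors s) -> existsb id eps = true -> forall y, central y ->
        ~ bounded_isol K w E (gmul (gmul (lin K (combine (map rho (seq 0 s)) (map b2z eps))) y) y)).
  { intro rho. rewrite !sat_big_and.
    split; intros [H1 H2]; split.
    - intros y Hy. apply in_map_iff in Hy. destruct Hy as [i [<- Hi]].
      apply (sat_central_formula K rho (s + 1) i). apply in_seq in Hi. lia.
      apply H1. apply in_map. auto.
    - intros eps Heps Hex. apply sat_rank_clause. apply bool_vectors_In; auto.
      apply H2. apply in_map. apply filter_In. auto.
    - intros p Hp. apply in_map_iff in Hp. destruct Hp as [i [<- Hi]].
      apply sat_central_formula. apply in_seq in Hi. lia. apply H1. apply in_map. auto.
    - intros p Hp. apply in_map_iff in Hp. destruct Hp as [eps [<- Heps]].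
      apply filter_In in Heps. destruct Heps as [Heps Hex].
      apply sat_rank_clause. apply bool_vectors_In; auto. apply H2; auto. }
  assert (Hvals : forall f, map (override K v 0 s f) (seq 0 s) = map f (seq 0 s)).
  { intro f. apply map_ext_in. intros i Hi. apply in_seq in Hi. apply override_in. lia. }
  split.
  - intros [f Hf]. apply Hbody in Hf. rewrite Hvals in Hf.
    exists (map f (seq 0 s)). rewrite length_map, length_seq. auto.
  - intros [z [Hz Hzc]]. exists (fun i => nth i z (@gone K)).
    apply Hbody. rewrite Hvals, <- Hz, map_nth_seq, Hz. auto.
Qed.

(* Additions with bases of the same length are isomorphic: map coordinates
   to coordinates. *)
Lemma iso_from_bases (G H : group) (G0 : gset G) (H0 : gset H) eG eH :
  addition G G0 -> addition H H0 ->
  is_basis G G0 eG -> is_basis H H0 eH -> length eG = length eH -> iso_sub G H G0 H0.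
Proof.
  intros HaG HaH HbG HbH Hlen.
  pose proof (addition_subgroup G G0 HaG) as HG0.
  pose proof (addition_subgroup H H0 HaH) as HH0.
  pose proof HbG as [HeG1 [HeG2 HeG3]]. pose proof HbH as [HeH1 [HeH2 HeH3]].
  pose proof (basis_allc G G0 eG HbG) as CG. pose proof (basis_allc H H0 eH HbH) as CH.
  exists (fun x => lin H (combine eH (coord G eG x))). split; [|split; [|split]].
  - intros x Hx. apply subgroup_lin; auto. intros; apply HeH1; auto.
  - intros x y Hx Hy.
    destruct (coord_spec G G0 eG x HbG Hx) as [Lx Ex].
    destruct (coord_spec G G0 eG y HbG Hy) as [Ly Ey].
    destruct (coord_spec G G0 eG (gmul x y) HbG (subgroup_mul _ _ _ _ HG0 Hx Hy)) as [Lxy Exy].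
    assert (E : coord G eG (gmul x y) = vadd (coord G eG x) (coord G eG y)).
    { apply (indep_unique G eG); auto. rewrite vadd_length; lia.
      rewrite <- Exy, <- lin_add; auto. rewrite <- Ex, <- Ey. auto. }
    rewrite E, lin_add; auto; lia.
  - intros x y Hx Hy Exy.
    destruct (coord_spec G G0 eG x HbG Hx) as [Lx Ex].
    destruct (coord_spec G G0 eG y HbG Hy) as [Ly Ey].
    apply (indep_unique H eH) in Exy; auto; try lia.
    rewrite Ex, Ey, Exy. auto.
  - intros y Hy. destruct (HeH3 y Hy) as [c [Hc ->]].
    set (x := lin G (combine eG c)).
    assert (Hx : G0 x) by (apply subgroup_lin; auto; intros; apply HeG1; auto).
    exists x. split; auto.
    destruct (coord_spec G G0 eG x HbG Hx) as [Lx Ex].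
    replace (coord G eG x) with c; auto.
    apply (indep_unique G eG); auto; lia.
Qed.

(* The rank of an addition of G is at most that of H when G and H are
   elementarily equivalent: the rank sentence for a good bound of H holds in
   G, hence in H. *)
Lemma rank_le_of_elem_equiv (G H : group) (G0 : gset G) (H0 : gset H) eG eH w E :
  elem_equiv G H -> addition G G0 -> addition H H0 ->
  is_basis G G0 eG -> is_basis H H0 eH -> good_bound H w E ->
  length eG <= length eH.
Proof.
  intros Heq HaG HaH HbG HbH Hgood.
  apply (rank_prop_le_basis H H0 HaH eH _ w E HbH Hgood).
  apply (sat_rank_sentence H (fun _ => gone)).
  apply (Heq _ (rank_sentence_closed _ _ _)).
  apply (sat_rank_sentence G (fun _ => gone)).
  apply (basis_rank_prop G G0 HaG eG w E HbG), Hgood.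
Qed.

Theorem mainTheorem6 (G H : group) (G0 : gset G) (H0 : gset H) :
  fin_gen G -> nilpotent G -> fin_gen H -> nilpotent H ->
  elem_equiv G H ->
  addition G G0 -> addition H H0 ->
  iso_sub G H G0 H0.
Proof.
  intros HfgG HnilG HfgH HnilH Heq HaddG HaddH.
  destruct (addition_basis G G0 HaddG HfgG HnilG) as [eG HbG].
  destruct (addition_basis H H0 HaddH HfgH HnilH) as [eH HbH].
  destruct (good_bound_exists G HfgG HnilG) as [wG [EG HgoodG]].
  destruct (good_bound_exists H HfgH HnilH) as [wH [EH HgoodH]].
  assert (Heq' : elem_equiv H G) by (intros phi Hphi; symmetry; apply Heq; auto).
  apply (iso_from_bases G H G0 H0 eG eH HaddG HaddH HbG HbH).
  apply Nat.le_antisymm.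
  - apply (rank_le_of_elem_equiv G H G0 H0 eG eH wH EH); auto.
  - apply (rank_le_of_elem_equiv H G H0 G0 eH eG wG EG); auto.
Qed.
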